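(* Let $p\in S$ be a nonzero orthogonal projection. The following are equivalent: (i) $p\otimes p\le\delta(p)$; (ii) $\delta(p)(1\otimes p)=p\otimes p$; (iii) $\delta(p)(p\otimes1)=p\otimes p$; (iv) $\rho(\omega_{e,pe})\ge0$; (v) $\langle e,pe\rangle^{-1}\rho(\omega_{e,pe})$ is an orthogonal projection; (vi) $f=\|pe\|^{-1}pe$ is a pre-subgroup of $V$ and $p=L(\omega_{f,f})$.
   Context: Let $\mathcal H$ be a finite-dimensional Hilbert space (inner products linear in the second variable) and $V$ a multiplicative unitary on $\mathcal H$ ($V_{12}V_{13}V_{23}=V_{23}V_{12}$) of multiplicity 1 (one-dimensional space of fixed vectors $\xi$, i.e. $V(\xi\otimes\eta)=\xi\otimes\eta$ for all $\eta$). Fix a unit fixed vector $e$. $\omega_{\xi,\eta}(T)=\langle\xi,T\eta\rangle$; $L(\omega)=(\omega\otimes\mathrm{id})(V)$, $\rho(\omega)=(\mathrm{id}\otimes\omega)(V)$; $S=\{L(\omega):\omega\in\mathcal L(\mathcal H)^*\}$ is a unital $*$-subalgebra of $\mathcal L(\mathcal H)$, and $\delta:S\to S\otimes S$, $\delta(x)=V(x\otimes1)V^*$. A pre-subgroup is $f\in\mathcal H$ with $\|f\|=1$, $\langle f,e\rangle>0$, $V(f\otimes f)=f\otimes f$. *)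

(* Finite-dimensional Hilbert space H = C^I (I a finite type,
   standard inner product, linear in the second variable), over an arbitrary
   numClosedFieldType C (e.g. algC or complex R); operators are kernels
   I -> I -> C, H (x) H = C^(I * I). *)
From HB Require Import structures.
From mathcomp Require Import all_boot all_order all_algebra.
Set Implicit Arguments. Unset Strict Implicit. Unset Printing Implicit Defensive.
Import Order.TTheory GRing.Theory Num.Theory.
Local Open Scope ring_scope.

Section Hilb.
Variable C : numClosedFieldType.

Definition vec (I : finType) := I -> C.
Definition op (I : finType) := I -> I -> C.

Definition inner {I : finType} (x y : vec I) : C := \sum_i (x i)^* * y i.
Definition vnorm {I : finType} (x : vec I) : C := sqrtC (inner x x).
Definition vscale {I : finType} (c : C) (x : vec I) : vec I := fun i => c * x i.

Definition opapp {I : finType} (T : op I) (x : vec I) : vec I :=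
  fun i => \sum_j T i j * x j.
Definition opmul {I : finType} (A B : op I) : op I :=
  fun i k => \sum_j A i j * B j k.
Definition opadj {I : finType} (A : op I) : op I := fun i j => (A j i)^*.
Definition op1 {I : finType} : op I := fun i j => (i == j)%:R.
Definition op0 {I : finType} : op I := fun _ _ => 0.
Definition opsub {I : finType} (A B : op I) : op I := fun i j => A i j - B i j.
Definition opscale {I : finType} (c : C) (A : op I) : op I := fun i j => c * A i j.

Definition vtens {I J : finType} (x : vec I) (y : vec J) : vec (I * J)%type :=
  fun ij => x ij.1 * y ij.2.
Definition optens {I J : finType} (A : op I) (B : op J) : op (I * J)%type :=
  fun ij kl => A ij.1 kl.1 * B ij.2 kl.2.

(* leg numbering on H (x) H (x) H = C^((I * I) * I)%type *)
Definition leg12 {I : finType} (V : op (I * I)%type) : op ((I * I) * I)%type :=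
  optens V op1.
Definition leg23 {I : finType} (V : op (I * I)%type) : op ((I * I) * I)%type :=
  fun a b => (a.1.1 == b.1.1)%:R * V (a.1.2, a.2) (b.1.2, b.2).
Definition leg13 {I : finType} (V : op (I * I)%type) : op ((I * I) * I)%type :=
  fun a b => V (a.1.1, a.2) (b.1.1, b.2) * (a.1.2 == b.1.2)%:R.

Definition unitary {I : finType} (U : op I) :=
  opmul (opadj U) U = op1 /\ opmul U (opadj U) = op1.

Definition multiplicative_unitary {I : finType} (V : op (I * I)%type) :=
  unitary V /\
  opmul (opmul (leg12 V) (leg13 V)) (leg23 V) = opmul (leg23 V) (leg12 V).

Definition fixed_vector {I : finType} (V : op (I * I)%type) (xi : vec I) :=
  forall eta : vec I, opapp V (vtens xi eta) = vtens xi eta.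

Definition lin_functional {I : finType} (w : op I -> C) :=
  (forall A B, w (fun i j => A i j + B i j) = w A + w B) /\
  (forall c A, w (opscale c A) = c * w A).

Definition omega {I : finType} (xi eta : vec I) : op I -> C :=
  fun T => inner xi (opapp T eta).

(* slice maps: L(w) = (w (x) id)(V),  rho(w) = (id (x) w)(V) *)
Definition Lsl {I : finType} (V : op (I * I)%type) (w : op I -> C) : op I :=
  fun k l => w (fun i j => V (i, k) (j, l)).
Definition rho {I : finType} (V : op (I * I)%type) (w : op I -> C) : op I :=
  fun i j => w (fun k l => V (i, k) (j, l)).

Definition inS {I : finType} (V : op (I * I)%type) (x : op I) :=
  exists w, lin_functional w /\ x = Lsl V w.

Definition delta {I : finType} (V : op (I * I)%type) (x : op I) : op (I * I)%type :=
  opmul (opmul V (optens x op1)) (opadj V).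

Definition positive_op {I : finType} (A : op I) :=
  forall x : vec I, 0 <= inner x (opapp A x).
Definition op_le {I : finType} (A B : op I) := positive_op (opsub B A).

Definition orth_proj {I : finType} (p : op I) :=
  opadj p = p /\ opmul p p = p.

Definition pre_subgroup {I : finType} (V : op (I * I)%type) (e f : vec I) :=
  vnorm f = 1 /\ 0 < inner f e /\ opapp V (vtens f f) = vtens f f.

End Hilb.
Arguments op1 {C I}.
Arguments op0 {C I}.

From HB Require Import structures.
From mathcomp Require Import all_boot all_order all_algebra.
From Stdlib Require Import FunctionalExtensionality.
From mathcomp Require Import ring.
Import Order.TTheory GRing.Theory Num.Theory.
Local Open Scope ring_scope.
Set Implicit Arguments. Unset Strict Implicit. Unset Printing Implicit Defensive.

(* Write p = L(W) for a density matrix W, let n = dim H, psi = p e and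
   c = <e, psi> = |psi|^2.  Multiplicity one forces the partial trace
   (id (x) Tr)(V) to be n |e><e|, so the normalised trace of any L(W) equals
   <e, L(W) e>: the vector state of e is a trace on the slices, and c > 0.
   All six conditions turn out to be equivalent to V (psi (x) psi) = psi (x) psi.
   - (i) gives it because delta(p) is a projection fixing psi (x) psi that acts
     on e (x) _ as V (p (x) 1).
   - Conversely, if f = psi / |psi| is V-fixed then q = L(omega_{f,f}) is a
     projection with Tr q = Tr pq = Tr p, so q = p; and delta(q) acts as q (x) 1
     (resp. 1 (x) q) on vectors whose second (resp. first) leg is fixed by V
     together with f, which gives (ii) and (iii), and each of these gives (i).
   - For R = rho(omega_{e,psi}) the pentagon equation computes R^2 as a slice
     of V^*(psi (x) psi), so the fixed point gives R^2 = c R, i.e. (v); back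
     from (v), the Plancherel identity sum |rho(omega_{e,g})_ij|^2 = |g|^2
     recovers the fixed point.
   - If R >= 0 then <y, R y> <= c |y|^2 and Cauchy-Schwarz give R^2 <= c R,
     while Tr (c R - R^2) = c (Tr W - 1) <= 0 because Tr W is an idempotent
     scalar; so R^2 = c R. *)

Section BigSums.
Variable R : comNzRingType.

Lemma sum_indicl (T : finType) (a : T) (F : T -> R) : \sum_x (x == a)%:R * F x = F a.
Proof.
rewrite (bigD1 a) //= eqxx mul1r big1 ?addr0 // => x /negbTE ->; by rewrite mul0r.
Qed.
Lemma sum_indicl_sym (T : finType) (a : T) (F : T -> R) : \sum_x (a == x)%:R * F x = F a.
Proof. by under eq_bigr do rewrite eq_sym; rewrite sum_indicl. Qed.
Lemma sum_indicr (T : finType) (a : T) (F : T -> R) : \sum_x F x * (x == a)%:R = F a.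
Proof. by under eq_bigr do rewrite mulrC; rewrite sum_indicl. Qed.

Lemma sum_pair (A B : finType) (F : A * B -> R) :
  \sum_(x : A * B) F x = \sum_a \sum_b F (a, b).
Proof. by rewrite pair_big; apply: eq_bigr => -[a b]. Qed.

Lemma sum_triple (T : finType) (F : (T * T) * T -> R) :
  \sum_x F x = \sum_a \sum_b \sum_c F ((a, b), c).
Proof.
by rewrite sum_pair sum_pair.
Qed.

Lemma sum_rot3 (A X Y : finType) (G : A -> X -> Y -> R) :
  \sum_a \sum_x \sum_y G a x y = \sum_x \sum_y \sum_a G a x y.
Proof. rewrite exchange_big; apply: eq_bigr => x _; exact: exchange_big. Qed.
Lemma sum_rot4 (A X Y Z : finType) (G : A -> X -> Y -> Z -> R) :
  \sum_a \sum_x \sum_y \sum_z G a x y z = \sum_x \sum_y \sum_z \sum_a G a x y z.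
Proof. rewrite exchange_big; apply: eq_bigr => x _; exact: sum_rot3. Qed.
Lemma sum_rot5 (A X Y Z W : finType) (G : A -> X -> Y -> Z -> W -> R) :
  \sum_a \sum_x \sum_y \sum_z \sum_w G a x y z w = \sum_x \sum_y \sum_z \sum_w \sum_a G a x y z w.
Proof. rewrite exchange_big; apply: eq_bigr => x _; exact: sum_rot4. Qed.

Lemma sum_shift4_of7 (T : finType) (G : T -> T -> T -> T -> T -> T -> T -> R) :
  \sum_i \sum_j \sum_i' \sum_j' \sum_a \sum_b' \sum_b G i j i' j' a b' b =
  \sum_a \sum_b' \sum_b \sum_i \sum_j \sum_i' \sum_j' G i j i' j' a b' b.
Proof.
under eq_bigr do under eq_bigr do under eq_bigr do rewrite sum_rot4.
under eq_bigr do under eq_bigr do rewrite sum_rot4.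
under eq_bigr do rewrite sum_rot4.
by rewrite sum_rot4.
Qed.

Lemma sum_rot6 (A X Y Z W U : finType) (G : A -> X -> Y -> Z -> W -> U -> R) :
  \sum_a \sum_x \sum_y \sum_z \sum_w \sum_u G a x y z w u =
  \sum_x \sum_y \sum_z \sum_w \sum_u \sum_a G a x y z w u.
Proof. rewrite exchange_big; apply: eq_bigr => x _; exact: sum_rot5. Qed.

Lemma sum_perm6 (T : finType) (G : T -> T -> T -> T -> T -> T -> R) :
  \sum_i \sum_j \sum_k \sum_l \sum_k' \sum_l' G i j k l k' l' =
  \sum_l \sum_l' \sum_k \sum_k' \sum_i \sum_j G i j k l k' l'.
Proof.
rewrite sum_rot6 sum_rot6 exchange_big; apply: eq_bigr => l _.
by rewrite sum_rot3 sum_rot3.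
Qed.

Lemma sum_shift3_of5 (T : finType) (G : T -> T -> T -> T -> T -> R) :
  \sum_a \sum_b \sum_c \sum_x \sum_y G a b c x y = \sum_x \sum_y \sum_a \sum_b \sum_c G a b c x y.
Proof.
under eq_bigr do under eq_bigr do rewrite sum_rot3.
under eq_bigr do rewrite sum_rot3.
by rewrite sum_rot3.
Qed.

Section Triple.
Variable T : finType.
Implicit Types (X : T -> T -> T -> R).

Lemma sum3_indic12 a0 b0 X :
  \sum_a \sum_b \sum_c ((a == a0)%:R * ((b == b0)%:R * X a b c)) = \sum_c X a0 b0 c.
Proof.
under eq_bigr => a _ do under eq_bigr => b _ do rewrite -mulr_sumr.
under eq_bigr => a _ do rewrite -mulr_sumr.
rewrite sum_indicl.
by under eq_bigr => b _ do rewrite -mulr_sumr; rewrite sum_indicl.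
Qed.
Lemma sum3_indic13 a0 c0 X :
  \sum_a \sum_b \sum_c ((a == a0)%:R * ((c == c0)%:R * X a b c)) = \sum_b X a0 b c0.
Proof.
under eq_bigr => a _ do under eq_bigr => b _ do rewrite -mulr_sumr sum_indicl.
under eq_bigr => a _ do rewrite -mulr_sumr.
by rewrite sum_indicl.
Qed.
Lemma sum3_indic23 b0 c0 X :
  \sum_a \sum_b \sum_c ((b == b0)%:R * ((c == c0)%:R * X a b c)) = \sum_a X a b0 c0.
Proof.
under eq_bigr => a _ do under eq_bigr => b _ do rewrite -mulr_sumr sum_indicl.
by under eq_bigr => a _ do rewrite sum_indicl.
Qed.
Lemma sum3_indic3 c0 X :
  \sum_a \sum_b \sum_c ((c == c0)%:R * X a b c) = \sum_a \sum_b X a b c0.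
Proof.
by under eq_bigr => a _ do under eq_bigr => b _ do rewrite sum_indicl.
Qed.
Lemma sum3_indic1 a0 X :
  \sum_a \sum_b \sum_c ((a == a0)%:R * X a b c) = \sum_b \sum_c X a0 b c.
Proof.
under eq_bigr => a _ do under eq_bigr => b _ do rewrite -mulr_sumr.
under eq_bigr => a _ do rewrite -mulr_sumr.
by rewrite sum_indicl.
Qed.
End Triple.

End BigSums.

Section Hilbert.
Variable C : numClosedFieldType.
Variable J : finType.
Implicit Types (a b : C) (x y z u v : vec C J) (A B P U M X Y : op C J).

Definition vadd x y : vec C J := fun i => x i + y i.
Definition vsub x y : vec C J := fun i => x i - y i.
Definition vzero : vec C J := fun _ => 0.
Definition basis (j : J) : vec C J := fun i => (i == j)%:R.
Definition optr A : C := \sum_i A i i.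

Lemma inner_conj x y : inner y x = (inner x y)^*.
Proof.
rewrite /inner rmorph_sum; apply: eq_bigr => i _.
by rewrite rmorphM /= conjCK mulrC.
Qed.

Lemma innerDr x y z : inner x (vadd y z) = inner x y + inner x z.
Proof. by rewrite /inner -big_split; apply: eq_bigr => i _; rewrite mulrDr. Qed.
Lemma innerBr x y z : inner x (vsub y z) = inner x y - inner x z.
Proof. by rewrite /inner -sumrB; apply: eq_bigr => i _; rewrite mulrBr. Qed.
Lemma innerDl x y z : inner (vadd x y) z = inner x z + inner y z.
Proof. by rewrite /inner -big_split; apply: eq_bigr => i _; rewrite rmorphD mulrDl. Qed.
Lemma innerBl x y z : inner (vsub x y) z = inner x z - inner y z.
Proof. by rewrite /inner -sumrB; apply: eq_bigr => i _; rewrite rmorphB mulrBl. Qed.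
Lemma innerZr x c y : inner x (vscale c y) = c * inner x y.
Proof. by rewrite /inner mulr_sumr; apply: eq_bigr => i _; rewrite /vscale mulrCA. Qed.
Lemma innerZl x c y : inner (vscale c x) y = c^* * inner x y.
Proof. by rewrite /inner mulr_sumr; apply: eq_bigr => i _; rewrite /vscale rmorphM mulrA. Qed.
Lemma inner0r x : inner x vzero = 0.
Proof. by rewrite /inner big1 // => i _; rewrite mulr0. Qed.

Lemma inner_ge0 x : 0 <= inner x x.
Proof. by rewrite /inner sumr_ge0 // => i _; rewrite mulrC mul_conjC_ge0. Qed.

Lemma inner_self_real x : (inner x x)^* = inner x x.
Proof. by rewrite geC0_conj // inner_ge0. Qed.

Lemma inner_self_eq0 x : inner x x = 0 -> x = vzero.
Proof.
move=> h; apply: functional_extensionality => i.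
have : (x i)^* * x i == 0.
  move/eqP: h; rewrite /inner psumr_eq0 => [/allP/(_ i (mem_index_enum _))/implyP/(_ isT)//|].
  by move=> j _; rewrite mulrC mul_conjC_ge0.
by rewrite mulrC mul_conjC_eq0 => /eqP.
Qed.

Lemma inner_basisl j x : inner (basis j) x = x j.
Proof.
rewrite /inner /basis (bigD1 j) //= big1 => [|i /negbTE ->]; last by rewrite conjC0 mul0r.
by rewrite eqxx conjC1 mul1r addr0.
Qed.
Lemma inner_basisr j x : inner x (basis j) = (x j)^*.
Proof. by rewrite inner_conj inner_basisl. Qed.

Lemma opapp_basis A j : opapp A (basis j) = fun i => A i j.
Proof.
apply: functional_extensionality => i; rewrite /opapp /basis (bigD1 j) //= big1 => [|k /negbTE ->].
  by rewrite eqxx mulr1 addr0.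
by rewrite mulr0.
Qed.

Lemma op_ext A B : (forall x, opapp A x = opapp B x) -> A = B.
Proof.
move=> h; apply: functional_extensionality => i; apply: functional_extensionality => j.
by move: (h (basis j)); rewrite !opapp_basis => /(congr1 (fun f => f i)).
Qed.

Lemma vec_ext x y : (forall z, inner z x = inner z y) -> x = y.
Proof.
move=> h; apply: functional_extensionality => i.
by move: (h (basis i)); rewrite !inner_basisl.
Qed.

Lemma inner_adjr A x y : inner x (opapp A y) = inner (opapp (opadj A) x) y.
Proof.
rewrite /inner /opapp /opadj.
under eq_bigr do rewrite mulr_sumr.
rewrite exchange_big /=; apply: eq_bigr => j _.
rewrite rmorph_sum mulr_suml; apply: eq_bigr => i _.
by rewrite rmorphM /= conjCK mulrCA mulrA.
Qed.

Lemma inner_adjl A x y : inner (opapp A x) y = inner x (opapp (opadj A) y).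
Proof.
by rewrite inner_adjr; congr inner; apply: functional_extensionality => i;
   rewrite /opapp /opadj; apply: eq_bigr => j _; rewrite conjCK.
Qed.

Lemma opadjK A : opadj (opadj A) = A.
Proof.
by apply: functional_extensionality => i; apply: functional_extensionality => j;
   rewrite /opadj conjCK.
Qed.

Lemma opapp_mul A B x : opapp (opmul A B) x = opapp A (opapp B x).
Proof.
apply: functional_extensionality => i; rewrite /opapp /opmul.
under eq_bigr do rewrite mulr_suml.
rewrite exchange_big /=; apply: eq_bigr => j _; rewrite mulr_sumr.
by apply: eq_bigr => k _; rewrite mulrA.
Qed.

Lemma opapp1 x : opapp op1 x = x.
Proof.
apply: functional_extensionality => i; rewrite /opapp /op1 (bigD1 i) //= big1.
  by rewrite eqxx mul1r addr0.
by move=> j; rewrite eq_sym => /negbTE ->; rewrite mul0r.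
Qed.

Lemma opmulA A B P : opmul A (opmul B P) = opmul (opmul A B) P.
Proof. by apply: op_ext => x; rewrite !opapp_mul. Qed.
Lemma opmul1l A : opmul op1 A = A.
Proof. by apply: op_ext => x; rewrite !opapp_mul opapp1. Qed.
Lemma opmul1r A : opmul A op1 = A.
Proof. by apply: op_ext => x; rewrite !opapp_mul opapp1. Qed.

Lemma opadj_mul A B : opadj (opmul A B) = opmul (opadj B) (opadj A).
Proof.
apply: functional_extensionality => i; apply: functional_extensionality => j.
rewrite /opadj /opmul rmorph_sum; apply: eq_bigr => k _; by rewrite rmorphM mulrC.
Qed.

Lemma opappD A x y : opapp A (vadd x y) = vadd (opapp A x) (opapp A y).
Proof.
apply: functional_extensionality => i; rewrite /opapp /vadd -big_split.
by apply: eq_bigr => j _; rewrite mulrDr.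
Qed.
Lemma opappB A x y : opapp A (vsub x y) = vsub (opapp A x) (opapp A y).
Proof.
apply: functional_extensionality => i; rewrite /opapp /vsub -sumrB.
by apply: eq_bigr => j _; rewrite mulrBr.
Qed.
Lemma opappZ A c x : opapp A (vscale c x) = vscale c (opapp A x).
Proof.
apply: functional_extensionality => i; rewrite /opapp /vscale mulr_sumr.
by apply: eq_bigr => j _; rewrite mulrCA.
Qed.

Lemma unitary_adj_app U x : unitary U -> opapp (opadj U) (opapp U x) = x.
Proof. by case=> h _; rewrite -opapp_mul h opapp1. Qed.
Lemma unitary_app_adj U x : unitary U -> opapp U (opapp (opadj U) x) = x.
Proof. by case=> _ h; rewrite -opapp_mul h opapp1. Qed.
Lemma unitary_inner U x y : unitary U -> inner (opapp U x) (opapp U y) = inner x y.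
Proof. by move=> hU; rewrite inner_adjl unitary_adj_app. Qed.

Lemma inner_vsub_self x y :
  inner (vsub x y) (vsub x y) = inner x x - inner x y - inner y x + inner y y.
Proof. rewrite innerBl !innerBr; ring. Qed.

Lemma vsub_eq0 x y : vsub x y = vzero -> x = y.
Proof.
move=> h; apply: functional_extensionality => i.
by move/(congr1 (fun f => f i)): h; rewrite /vsub /vzero => /eqP; rewrite subr_eq0 => /eqP.
Qed.

Lemma unitary_fixed U x : unitary U -> inner x (opapp U x) = inner x x -> opapp U x = x.
Proof.
move=> hU h; apply: vsub_eq0; apply: inner_self_eq0.
rewrite inner_vsub_self unitary_inner // (inner_conj x (opapp U x)) h inner_self_real.
ring.
Qed.

Lemma unitary_fixed_adj U x : unitary U -> opapp U x = x -> opapp (opadj U) x = x.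
Proof. by move=> hU h; rewrite -{1}h unitary_adj_app. Qed.

Lemma proj_inner_self P x : orth_proj P -> inner x (opapp P x) = inner (opapp P x) (opapp P x).
Proof. by case=> h1 h2; rewrite inner_adjl h1 -opapp_mul h2. Qed.

Lemma proj_fixed P x : orth_proj P -> inner x (opapp P x) = inner x x -> opapp P x = x.
Proof.
move=> hP h; apply/esym/vsub_eq0; apply: inner_self_eq0.
rewrite inner_vsub_self -proj_inner_self // (inner_conj x (opapp P x)) h inner_self_real.
ring.
Qed.

Lemma proj_eq0 P x : orth_proj P -> inner x (opapp P x) = 0 -> opapp P x = vzero.
Proof. by move=> hP h; apply: inner_self_eq0; rewrite -proj_inner_self. Qed.

Lemma proj_inner_le P x : orth_proj P -> inner x (opapp P x) <= inner x x.
Proof.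
move=> hP; rewrite -subr_ge0.
have := inner_ge0 (vsub x (opapp P x)).
have hr : (inner x (opapp P x))^* = inner x (opapp P x).
  by rewrite proj_inner_self // inner_self_real.
rewrite inner_vsub_self -proj_inner_self // (inner_conj x (opapp P x)) hr.
by set a := inner x (opapp P x); rewrite (_ : _ - a - a + a = inner x x - a) //; ring.
Qed.

Lemma opapp_opsub A B x : opapp (opsub A B) x = vsub (opapp A x) (opapp B x).
Proof.
apply: functional_extensionality => i; rewrite /opapp /opsub /vsub -sumrB.
by apply: eq_bigr => j _; rewrite mulrBl.
Qed.

Lemma quad_form_vadd A u v t :
  inner (vadd u (vscale t v)) (opapp A (vadd u (vscale t v))) =
  inner u (opapp A u) + t * inner u (opapp A v) + t^* * inner v (opapp A u)
  + t^* * t * inner v (opapp A v).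
Proof.
rewrite opappD opappZ !innerDl !innerDr !innerZl !innerZr; ring.
Qed.

Lemma inner_basis_opapp A i j : inner (basis i) (opapp A (basis j)) = A i j.
Proof. by rewrite opapp_basis inner_basisl. Qed.

Lemma quad_form0_entry B : (forall x, inner x (opapp B x) = 0) -> forall i j, B i j = 0.
Proof.
move=> h i j.
have h1 := h (vadd (basis i) (vscale 1 (basis j))).
have h2 := h (vadd (basis i) (vscale 'i (basis j))).
rewrite quad_form_vadd in h1; rewrite quad_form_vadd in h2.
rewrite !(h (basis i)) !(h (basis j)) !inner_basis_opapp in h1 h2.
rewrite conjC1 !mul1r in h1.
rewrite conjCi in h2.
have e1 : B j i = - B i j by apply/eqP; rewrite -addr_eq0 addrC; apply/eqP;
  move: h1; rewrite add0r addr0 => ->.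
rewrite e1 in h2.
move/eqP: h2; rewrite add0r mulr0 addr0.
have -> : 'i * B i j + - 'i * - B i j = (1 + 1) * 'i * B i j by ring.
rewrite !mulf_eq0 (negbTE (@neq0Ci C)) orbF => /orP[|/eqP //].
by rewrite (_ : (1 + 1 : C) = 2%:R) // pnatr_eq0.
Qed.

Lemma positive_inner_real A x : positive_op A -> (inner x (opapp A x))^* = inner x (opapp A x).
Proof. by move=> hA; rewrite geC0_conj. Qed.

Lemma positive_selfadj A : positive_op A -> opadj A = A.
Proof.
move=> hA.
have h : forall i j, (opsub A (opadj A)) i j = 0.
  apply: quad_form0_entry => x.
  rewrite opapp_opsub innerBr -inner_adjl (inner_conj x (opapp A x)) positive_inner_real //.
  by rewrite subrr.
apply: functional_extensionality => i; apply: functional_extensionality => j.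
by move: (h i j); rewrite /opsub => /eqP; rewrite subr_eq0 => /eqP.
Qed.

Lemma selfadj_innerC A x y : opadj A = A -> inner x (opapp A y) = (inner y (opapp A x))^*.
Proof. by move=> hA; rewrite -inner_conj inner_adjl hA. Qed.

Lemma positive_cauchy_schwarz A x y : positive_op A ->
  inner y (opapp A x) * (inner y (opapp A x))^* <= inner y (opapp A y) * inner x (opapp A x).
Proof.
move=> hA.
have hsa := positive_selfadj hA.
set a := inner x (opapp A x); set N := inner y (opapp A y); set b := inner y (opapp A x).
have ha : 0 <= a by apply: hA.
have hN : 0 <= N by apply: hA.
have hxy : inner x (opapp A y) = b^* by rewrite (selfadj_innerC x y hsa).
have hbb : 0 <= b * b^* by apply: mul_conjC_ge0.
have [a0|apos] := eqVneq a 0.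
- rewrite a0 mulr0.
  have [b0|bn0] := eqVneq (b * b^*) 0; first by rewrite b0.
  exfalso.
  set m := b * b^* in bn0 hbb *.
  set k := (N + 1) / m.
  have hk0 : 0 <= k by rewrite divr_ge0 // addr_ge0.
  have hk : k^* = k by rewrite geC0_conj.
  have hkm : k * m = N + 1 by rewrite /k mulfVK.
  set t := - k * b^*.
  have := hA (vadd y (vscale t x)).
  rewrite quad_form_vadd hxy -/a -/N -/b a0 mulr0 addr0.
  have -> : N + t * b + t^* * b^* = N - (N + 1) - (N + 1).
    rewrite /t rmorphM rmorphN /= conjCK hk -hkm /m; ring.
  have -> : N - (N + 1) - (N + 1) = - (N + 2%:R) by ring.
  rewrite oppr_ge0 => h.
  have : 0 < N + 2%:R by rewrite ltr_wpDl.
  by rewrite lt_leAnge h andbF.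
- have apos' : 0 < a by rewrite lt_def apos ha.
  have := hA (vadd (vscale a y) (vscale (- b^*) x)).
  rewrite quad_form_vadd opappZ !innerZl !innerZr hxy -/a -/N -/b (geC0_conj ha).
  rewrite rmorphN /= conjCK.
  have -> : a * (a * N) + - b^* * (a * b) + - b * (a * b^*) + - b * - b^* * a
           = a * (a * N - b * b^*) by ring.
  rewrite pmulr_rge0 // subr_ge0 => h.
  by rewrite (mulrC N).
Qed.

Lemma positive_optr_le0 M : positive_op M -> optr M <= 0 -> forall i j, M i j = 0.
Proof.
move=> hM htr.
have hd : forall i, 0 <= M i i by move=> i; rewrite -inner_basis_opapp; apply: hM.
have hsum : \sum_i M i i = 0 by apply/eqP; rewrite eq_le htr sumr_ge0.
have hdiag : forall i, M i i = 0.
  move=> i; move/eqP: hsum; rewrite psumr_eq0 // => /allP/(_ i (mem_index_enum _)).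
  by move/implyP/(_ isT)/eqP.
move=> i j.
have := positive_cauchy_schwarz (basis j) (basis i) hM.
rewrite !inner_basis_opapp !hdiag mulr0 => h.
have : M i j * (M i j)^* == 0 by rewrite eq_le h mul_conjC_ge0.
by rewrite mul_conjC_eq0 => /eqP.
Qed.

Lemma unitary_fixed_family (U : op C J) (S : finType) (u : S -> vec C J) :
  unitary U -> \sum_s inner (u s) (opapp U (u s)) = \sum_s inner (u s) (u s) ->
  forall s, opapp U (u s) = u s.
Proof.
move=> hU h.
have hsum : \sum_s inner (vsub (opapp U (u s)) (u s)) (vsub (opapp U (u s)) (u s)) = 0.
  under eq_bigr do rewrite inner_vsub_self unitary_inner // (inner_conj (u _) (opapp U (u _))).
  rewrite !big_split /= !sumrN -rmorph_sum /= h.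
  rewrite geC0_conj; last by apply: sumr_ge0 => s _; apply: inner_ge0.
  ring.
move=> s; apply: vsub_eq0; apply: inner_self_eq0.
move/eqP: hsum; rewrite psumr_eq0; last by move=> t _; apply: inner_ge0.
by move/allP/(_ s (mem_index_enum _))/implyP/(_ isT)/eqP.
Qed.

Lemma opmulBl A B P : opmul (opsub A B) P = opsub (opmul A P) (opmul B P).
Proof.
apply: functional_extensionality => i; apply: functional_extensionality => j.
by rewrite /opmul /opsub -sumrB; apply: eq_bigr => k _; rewrite mulrBl.
Qed.
Lemma opmulBr A B P : opmul P (opsub A B) = opsub (opmul P A) (opmul P B).
Proof.
apply: functional_extensionality => i; apply: functional_extensionality => j.
by rewrite /opmul /opsub -sumrB; apply: eq_bigr => k _; rewrite mulrBr.
Qed.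
Lemma opadjB A B : opadj (opsub A B) = opsub (opadj A) (opadj B).
Proof.
by apply: functional_extensionality => i; apply: functional_extensionality => j;
   rewrite /opadj /opsub rmorphB.
Qed.
Lemma optrB A B : optr (opsub A B) = optr A - optr B.
Proof. by rewrite /optr /opsub sumrB. Qed.
Lemma optrC A B : optr (opmul A B) = optr (opmul B A).
Proof.
rewrite /optr /opmul exchange_big; apply: eq_bigr => i _.
by apply: eq_bigr => j _; rewrite mulrC.
Qed.
Lemma optr_adj_mul_eq0 A : optr (opmul (opadj A) A) = 0 -> forall i j, A i j = 0.
Proof.
move=> h i j.
have hs : forall k, 0 <= \sum_l (A l k)^* * A l k.
  by move=> k; apply: sumr_ge0 => l _; rewrite mulrC mul_conjC_ge0.
move/eqP: h; rewrite /optr /opmul /opadj psumr_eq0 // => /allP/(_ j (mem_index_enum _)).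
move/implyP/(_ isT); rewrite psumr_eq0 => [/allP/(_ i (mem_index_enum _))/implyP/(_ isT)|].
  by rewrite mulrC mul_conjC_eq0 => /eqP.
by move=> l _; rewrite mulrC mul_conjC_ge0.
Qed.
Lemma opsub_eq0 A B : (forall i j, opsub A B i j = 0) -> A = B.
Proof.
move=> h; apply: functional_extensionality => i; apply: functional_extensionality => j.
by move: (h i j); rewrite /opsub => /eqP; rewrite subr_eq0 => /eqP.
Qed.
Lemma opappZl c A x : opapp (opscale c A) x = vscale c (opapp A x).
Proof.
apply: functional_extensionality => i; rewrite /opapp /opscale /vscale mulr_sumr.
by apply: eq_bigr => j _; rewrite mulrA.
Qed.

Lemma orth_proj_of_idem P : opmul P P = P ->
  (forall z, opapp (opadj P) (opapp P z) = opapp P z) -> orth_proj P.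
Proof.
move=> h1 h2.
have h3 : opmul (opadj P) P = P by apply: op_ext => z; rewrite opapp_mul h2.
split => //.
by rewrite -{1}h3 opadj_mul opadjK h3.
Qed.

Lemma proj_sub_positive A B : orth_proj A -> orth_proj B -> opmul A B = B -> positive_op (opsub A B).
Proof.
move=> [a1 a2] [b1 b2] hAB.
have hBA : opmul B A = B by rewrite -b1 -a1 -opadj_mul hAB.
have hP : orth_proj (opsub A B).
  split; first by rewrite opadjB a1 b1.
  by rewrite opmulBl !opmulBr a2 hAB hBA b2; apply: opsub_eq0 => i j;
     rewrite /opsub; ring.
move=> x; rewrite proj_inner_self //; exact: inner_ge0.
Qed.

Lemma unitary_inner_le U u : unitary U -> (inner u (opapp U u))^* = inner u (opapp U u) ->
  inner u (opapp U u) <= inner u u.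
Proof.
move=> hU hr.
have := inner_ge0 (vsub (opapp U u) u).
rewrite inner_vsub_self unitary_inner // (inner_conj u (opapp U u)) hr.
have -> : inner u u - inner u (opapp U u) - inner u (opapp U u) + inner u u
   = (1 + 1) * (inner u u - inner u (opapp U u)) by ring.
by rewrite pmulr_rge0 ?subr_ge0 // (_ : (1 + 1 : C) = 2%:R) // ltr0n.
Qed.

Lemma orth_proj_conj (U P : op C J) : unitary U -> orth_proj P ->
  orth_proj (opmul (opmul U P) (opadj U)).
Proof.
move=> [u1 u2] [p1 p2]; split.
  by rewrite !opadj_mul opadjK p1 opmulA.
rewrite -!opmulA (opmulA (opadj U)) u1 opmul1l.
by rewrite (opmulA P) p2.
Qed.

Lemma opscaleM (a b : C) X Y :
  opmul (opscale a X) (opscale b Y) = opscale (a * b) (opmul X Y).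
Proof.
apply: functional_extensionality => i; apply: functional_extensionality => k.
rewrite /opmul /opscale mulr_sumr; apply: eq_bigr => j _; ring.
Qed.
Lemma opadjZ a X : opadj (opscale a X) = opscale a^* (opadj X).
Proof.
by apply: functional_extensionality => i; apply: functional_extensionality => k;
   rewrite /opadj /opscale rmorphM.
Qed.
Lemma opscaleA (a b : C) X : opscale a (opscale b X) = opscale (a * b) X.
Proof.
by apply: functional_extensionality => i; apply: functional_extensionality => k;
   rewrite /opscale mulrA.
Qed.
Lemma opscale1 X : opscale 1 X = X.
Proof.
by apply: functional_extensionality => i; apply: functional_extensionality => k;
   rewrite /opscale mul1r.
Qed.
Lemma optrZ a X : optr (opscale a X) = a * optr X.
Proof. by rewrite /optr /opscale mulr_sumr. Qed.
Lemma opmulZr a X Y : opmul X (opscale a Y) = opscale a (opmul X Y).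
Proof.
apply: functional_extensionality => i; apply: functional_extensionality => k.
rewrite /opmul /opscale mulr_sumr; apply: eq_bigr => j _; ring.
Qed.

End Hilbert.

Section Tensor.
Variable C : numClosedFieldType.

Lemma natr_and (b1 b2 : bool) : ((b1 && b2)%:R : C) = b1%:R * b2%:R.
Proof. by case: b1; case: b2; rewrite ?mul1r ?mul0r. Qed.

Lemma op1_pair (I J : finType) (a : I * J) b :
  (op1 a b : C) = (a.1 == b.1)%:R * (a.2 == b.2)%:R.
Proof. by case: a => a1 a2; case: b => b1 b2; rewrite /op1 /= xpair_eqE natr_and. Qed.

Lemma opadj_tens (I J : finType) (A : op C I) (B : op C J) :
  opadj (optens A B) = optens (opadj A) (opadj B).
Proof.
by apply: functional_extensionality => x; apply: functional_extensionality => y;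
   rewrite /opadj /optens rmorphM.
Qed.

Lemma opmul_tens (I J : finType) (A A' : op C I) (B B' : op C J) :
  opmul (optens A B) (optens A' B') = optens (opmul A A') (opmul B B').
Proof.
apply: functional_extensionality => x; apply: functional_extensionality => y.
rewrite /opmul /optens sum_pair big_distrlr /=; apply: eq_bigr => a _.
by apply: eq_bigr => b _; ring.
Qed.

Lemma optens1 (I J : finType) : optens (@op1 C I) (@op1 C J) = op1.
Proof.
by apply: functional_extensionality => x; apply: functional_extensionality => y;
   rewrite op1_pair.
Qed.

Lemma unitary_tens (I J : finType) (A : op C I) (B : op C J) :
  unitary A -> unitary B -> unitary (optens A B).
Proof.
move=> [hA1 hA2] [hB1 hB2].
by split; rewrite opadj_tens opmul_tens ?hA1 ?hB1 ?hA2 ?hB2 optens1.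
Qed.

Lemma unitary1 (I : finType) : unitary (@op1 C I).
Proof.
have h : opadj (@op1 C I) = op1.
  by apply: functional_extensionality => x; apply: functional_extensionality => y;
     rewrite /opadj /op1 eq_sym; case: (_ == _); rewrite ?conjC1 ?conjC0.
by split; rewrite h opmul1l.
Qed.

Definition op_reindex (J K : finType) (phi : J -> K) (M : op C K) : op C J :=
  fun a b => M (phi a) (phi b).

Lemma op_reindex_mul (J K : finType) (phi : J -> K) (M M' : op C K) :
  bijective phi -> opmul (op_reindex phi M) (op_reindex phi M') = op_reindex phi (opmul M M').
Proof.
move=> hb; apply: functional_extensionality => a; apply: functional_extensionality => b.
rewrite /opmul /op_reindex (reindex phi) //; exact: onW_bij.
Qed.

Lemma op_reindex_adj (J K : finType) (phi : J -> K) (M : op C K) :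
  opadj (op_reindex phi M) = op_reindex phi (opadj M).
Proof. by []. Qed.

Lemma op_reindex1 (J K : finType) (phi : J -> K) :
  injective phi -> op_reindex phi (@op1 C K) = op1.
Proof.
move=> hi; apply: functional_extensionality => a; apply: functional_extensionality => b.
by rewrite /op_reindex /op1 (inj_eq hi).
Qed.

Lemma unitary_op_reindex (J K : finType) (phi : J -> K) (M : op C K) :
  bijective phi -> unitary M -> unitary (op_reindex phi M).
Proof.
move=> hb [h1 h2]; have hi := bij_inj hb.
by split; rewrite op_reindex_adj op_reindex_mul // ?h1 ?h2 op_reindex1.
Qed.

Lemma inner_vtens (J1 J2 : finType) (x x' : vec C J1) (y y' : vec C J2) :
  inner (vtens x y) (vtens x' y') = inner x x' * inner y y'.
Proof.
rewrite /inner /vtens sum_pair big_distrlr /=; apply: eq_bigr => a _.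
by apply: eq_bigr => b _; rewrite rmorphM /=; ring.
Qed.
Lemma inner_basis_self (J : finType) (l : J) : inner (basis C l) (basis C l) = 1.
Proof. by rewrite inner_basisl /basis eqxx. Qed.

Variable I : finType.
Definition assoc3 (x : ((I * I) * I)%type) : (I * (I * I))%type := (x.1.1, (x.1.2, x.2)).
Definition unassoc3 (x : (I * (I * I))%type) : ((I * I) * I)%type := ((x.1, x.2.1), x.2.2).

Lemma assoc3_bij : bijective assoc3.
Proof. by exists unassoc3 => [[[a b] c]|[a [b c]]]. Qed.

Lemma leg23E (V : op C (I * I)%type) : leg23 V = op_reindex assoc3 (optens op1 V).
Proof. by []. Qed.

Lemma leg12_unitary (V : op C (I * I)%type) : unitary V -> unitary (leg12 V).
Proof. by move=> hV; apply: unitary_tens => //; apply: unitary1. Qed.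
Lemma leg23_unitary (V : op C (I * I)%type) : unitary V -> unitary (leg23 V).
Proof.
move=> hV; rewrite leg23E; apply: unitary_op_reindex; first exact: assoc3_bij.
by apply: unitary_tens => //; apply: unitary1.
Qed.

End Tensor.

Section TensorMaps.
Variable C : numClosedFieldType.
Variables J1 J2 : finType.
Lemma opapp_tens (A : op C J1) (B : op C J2) x y :
  opapp (optens A B) (vtens x y) = vtens (opapp A x) (opapp B y).
Proof.
apply: functional_extensionality => -[i k].
rewrite /opapp /optens /vtens sum_pair big_distrlr /=; apply: eq_bigr => a _.
by apply: eq_bigr => b _; ring.
Qed.
Lemma vtensDl (x x' : vec C J1) (y : vec C J2) :
  vtens (vadd x x') y = vadd (vtens x y) (vtens x' y).
Proof. by apply: functional_extensionality => -[i k]; rewrite /vtens /vadd mulrDl. Qed.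
Lemma vtensDr (x : vec C J1) (y y' : vec C J2) :
  vtens x (vadd y y') = vadd (vtens x y) (vtens x y').
Proof. by apply: functional_extensionality => -[i k]; rewrite /vtens /vadd mulrDr. Qed.
Lemma vtensZ (a b : C) (x : vec C J1) (y : vec C J2) :
  vtens (vscale a x) (vscale b y) = vscale (a * b) (vtens x y).
Proof. by apply: functional_extensionality => -[i k]; rewrite /vtens /vscale; ring. Qed.
Lemma vtens_basis (j : J1) (l : J2) : vtens (basis C j) (basis C l) = basis C (j,l).
Proof.
apply: functional_extensionality => -[i k]; rewrite /vtens /basis xpair_eqE.
by case: (i == j); case: (k == l); rewrite ?mul1r ?mul0r.
Qed.
Lemma op_ext_tens (A B : op C (J1 * J2)%type) :
  (forall x y, opapp A (vtens x y) = opapp B (vtens x y)) -> A = B.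
Proof.
move=> h; apply: op_ext => z.
have hz : z = fun s => \sum_j \sum_l z (j,l) * vtens (basis C j) (basis C l) s.
  apply: functional_extensionality => -[i k].
  under eq_bigr do under eq_bigr do rewrite vtens_basis /basis mulrC.
  rewrite (eq_bigr (fun j => (j == i)%:R * z (j,k))) ?sum_indicl // => j _.
  transitivity (\sum_l ((j,l) == (i,k))%:R * z (j,l)); first by apply: eq_bigr => l _; rewrite eq_sym.
  transitivity (\sum_l (j == i)%:R * ((l == k)%:R * z (j,l))); last by rewrite -mulr_sumr sum_indicl.
  by apply: eq_bigr => l _; rewrite xpair_eqE natr_and mulrA.
have lin : forall M : op C (J1 * J2)%type,
    opapp M z = fun s => \sum_j \sum_l z (j,l) * opapp M (vtens (basis C j) (basis C l)) s.
  move=> M; rewrite {1}hz; apply: functional_extensionality => s.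
  rewrite /opapp.
  under eq_bigr do rewrite mulr_sumr.
  rewrite exchange_big; apply: eq_bigr => j _.
  under eq_bigr do rewrite mulr_sumr.
  rewrite exchange_big; apply: eq_bigr => l _.
  by rewrite mulr_sumr; apply: eq_bigr => t _; ring.
by rewrite !lin; apply: functional_extensionality => s;
   apply: eq_bigr => j _; apply: eq_bigr => l _; rewrite h.
Qed.
Lemma orth_proj_tens (A : op C J1) (B : op C J2) : orth_proj A -> orth_proj B -> orth_proj (optens A B).
Proof. by move=> [a1 a2] [b1 b2]; split; rewrite ?opadj_tens ?opmul_tens ?a1 ?b1 ?a2 ?b2. Qed.
End TensorMaps.
Lemma orth_proj1 (C : numClosedFieldType) (J : finType) : orth_proj (@op1 C J).
Proof. by have [h1 h2] := unitary1 C J; split; [rewrite -{2}h1 opmul1r | rewrite opmul1l]. Qed.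

Section Pentagon.
Variable C : numClosedFieldType.
Variable I : finType.
Variable V : op C (I * I)%type.
Hypothesis hMU : multiplicative_unitary V.

Let hU : unitary V := hMU.1.

Lemma pentagon13_23 : opmul (leg13 V) (leg23 V) = opmul (opmul (opadj (leg12 V)) (leg23 V)) (leg12 V).
Proof.
have u12 := leg12_unitary hU.
have e1 : opmul (leg13 V) (leg23 V) =
  opmul (opmul (opadj (leg12 V)) (leg12 V)) (opmul (leg13 V) (leg23 V)) by rewrite u12.1 opmul1l.
rewrite e1 -(opmulA (opadj (leg12 V)) (leg12 V)) (opmulA (leg12 V) (leg13 V)) hMU.2.
by rewrite opmulA.
Qed.

Lemma pentagon12_13 : opmul (leg12 V) (leg13 V) = opmul (opmul (leg23 V) (leg12 V)) (opadj (leg23 V)).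
Proof.
have u23 := leg23_unitary hU.
have e2 : opmul (leg12 V) (leg13 V) =
  opmul (opmul (leg12 V) (leg13 V)) (opmul (leg23 V) (opadj (leg23 V))) by rewrite u23.2 opmul1r.
by rewrite e2 opmulA hMU.2.
Qed.

Lemma leg13_leg23E i i' k j j' l :
  opmul (leg13 V) (leg23 V) ((i,i'),k) ((j,j'),l) = \sum_m V (i,k) (j,m) * V (i',m) (j',l).
Proof.
rewrite /opmul /leg13 /leg23 sum_triple /=.
transitivity (\sum_a \sum_b \sum_c ((a == j)%:R * ((b == i')%:R *
                 (V (i,k) (a,c) * V (b,c) (j',l))))); last by rewrite sum3_indic12.
apply: eq_bigr => a _; apply: eq_bigr => b _; apply: eq_bigr => c _.
rewrite (eq_sym i' b); ring.
Qed.

Lemma adj12_leg23E i i' k a b' c :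
  opmul (opadj (leg12 V)) (leg23 V) ((i,i'),k) ((a,b'),c) =
  \sum_b (V (a,b) (i,i'))^* * V (b,k) (b',c).
Proof.
rewrite /opmul /opadj /leg12 /leg23 /optens sum_triple /=.
transitivity (\sum_a1 \sum_b1 \sum_c1 ((a1 == a)%:R * ((c1 == k)%:R *
                 ((V (a1,b1) (i,i'))^* * V (b1,c1) (b',c))))); last by rewrite sum3_indic13.
apply: eq_bigr => a1 _; apply: eq_bigr => b1 _; apply: eq_bigr => c1 _.
rewrite /op1 /= rmorphM /= rmorph_nat; ring.
Qed.

Lemma opmul_leg12E (M : op C ((I * I) * I)%type) u j j' l :
  opmul M (leg12 V) u ((j,j'),l) = \sum_a \sum_b M u ((a,b),l) * V (a,b) (j,j').
Proof.
rewrite /opmul /leg12 /optens sum_triple /=.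
transitivity (\sum_a \sum_b \sum_c ((c == l)%:R * (M u ((a,b),c) * V (a,b) (j,j'))));
  last by rewrite sum3_indic3.
apply: eq_bigr => a _; apply: eq_bigr => b _; apply: eq_bigr => c _.
rewrite /op1 /=; ring.
Qed.

Lemma pentagon_sum13 i i' k j j' l :
  \sum_m V (i,k) (j,m) * V (i',m) (j',l) =
  \sum_a \sum_b' (\sum_b (V (a,b) (i,i'))^* * V (b,k) (b',l)) * V (a,b') (j,j').
Proof.
rewrite -leg13_leg23E pentagon13_23 opmul_leg12E.
by apply: eq_bigr => a _; apply: eq_bigr => b' _; rewrite adj12_leg23E.
Qed.

Lemma leg12_leg13E i k k' j l l' :
  opmul (leg12 V) (leg13 V) ((i,k),k') ((j,l),l') = \sum_m V (i,k) (m,l) * V (m,k') (j,l').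
Proof.
rewrite /opmul /leg12 /leg13 /optens sum_triple /=.
transitivity (\sum_a \sum_b \sum_c ((b == l)%:R * ((c == k')%:R *
                 (V (i,k) (a,b) * V (a,c) (j,l'))))); last by rewrite sum3_indic23.
apply: eq_bigr => a _; apply: eq_bigr => b _; apply: eq_bigr => c _.
rewrite /op1 /= (eq_sym k' c); ring.
Qed.

Lemma leg23_leg12E i k k' y :
  opmul (leg23 V) (leg12 V) ((i,k),k') y = \sum_b V (k,k') (b,y.2) * V (i,b) y.1.
Proof.
rewrite /opmul /leg12 /leg23 /optens sum_triple /=.
transitivity (\sum_a \sum_b \sum_c ((a == i)%:R * ((c == y.2)%:R *
                 (V (k,k') (b,c) * V (a,b) y.1)))); last first.
  by rewrite sum3_indic13; apply: eq_bigr => b _; case: y => [[y1 y2] y3].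
apply: eq_bigr => a _; apply: eq_bigr => b _; apply: eq_bigr => c _.
case: y => [[y1 y2] y3] /=; rewrite /op1 /= (eq_sym i a); ring.
Qed.

Lemma opmul_adj23E (M : op C ((I * I) * I)%type) u j l l' :
  opmul M (opadj (leg23 V)) u ((j,l),l') = \sum_b' \sum_c M u ((j,b'),c) * (V (l,l') (b',c))^*.
Proof.
rewrite /opmul /opadj /leg23 sum_triple /=.
transitivity (\sum_a \sum_b \sum_c ((a == j)%:R * (M u ((a,b),c) * (V (l,l') (b,c))^*)));
  last by rewrite sum3_indic1.
apply: eq_bigr => a _; apply: eq_bigr => b _; apply: eq_bigr => c _.
rewrite rmorphM /= rmorph_nat (eq_sym j a); ring.
Qed.

Lemma pentagon_sum12 i k k' j l l' :
  \sum_m V (i,k) (m,l) * V (m,k') (j,l') =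
  \sum_b' \sum_c (\sum_b V (k,k') (b,c) * V (i,b) (j,b')) * (V (l,l') (b',c))^*.
Proof.
rewrite -leg12_leg13E pentagon12_13 opmul_adj23E.
by apply: eq_bigr => b' _; apply: eq_bigr => c _; rewrite leg23_leg12E.
Qed.

Lemma unitary_sum_adj_mul i k j l :
  \sum_a \sum_b (V (a,b) (i,k))^* * V (a,b) (j,l) = ((i == j) && (k == l))%:R.
Proof.
have := congr1 (fun M => M (i,k) (j,l)) hU.1.
by rewrite /opmul /opadj /op1 sum_pair /= xpair_eqE.
Qed.

Lemma unitary_sum_mul_adj i k j l :
  \sum_a \sum_b V (i,k) (a,b) * (V (j,l) (a,b))^* = ((i == j) && (k == l))%:R.
Proof.
have := congr1 (fun M => M (i,k) (j,l)) hU.2.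
by rewrite /opmul /opadj /op1 sum_pair /= xpair_eqE.
Qed.

End Pentagon.

Section MultUnitary.
Variable C : numClosedFieldType.
Variable I : finType.
Variable V : op C (I * I)%type.
Variable e : vec C I.
Hypothesis hMU : multiplicative_unitary V.
Hypothesis hmult : forall xi : vec C I, fixed_vector V xi -> exists c : C, xi = vscale c e.
Hypothesis hfix : fixed_vector V e.
Hypothesis he1 : inner e e = 1.

Let hU : unitary V := hMU.1.

Lemma V_fixed_sum i k l : \sum_j V (i,k) (j,l) * e j = (k == l)%:R * e i.
Proof.
have := congr1 (fun v => v (i,k)) (hfix (basis C l)).
rewrite /opapp /vtens /basis sum_pair /= => h.
rewrite mulrC -h; apply: eq_bigr => a _.
transitivity (\sum_b V (i,k) (a,b) * e a * (b == l)%:R); first by rewrite sum_indicr.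
by apply: eq_bigr => b _; ring.
Qed.

Lemma Vadj_fixed_sum j l k : \sum_i (V (i,k) (j,l))^* * e i = (l == k)%:R * e j.
Proof.
have hv : opapp (opadj V) (vtens e (basis C k)) = vtens e (basis C k).
  by apply: unitary_fixed_adj => //; apply: hfix.
have := congr1 (fun v => v (j,l)) hv.
rewrite /opapp /opadj /vtens /basis sum_pair /= => h.
rewrite mulrC -h; apply: eq_bigr => a _.
transitivity (\sum_b (V (a,b) (j,l))^* * e a * (b == k)%:R); first by rewrite sum_indicr.
by apply: eq_bigr => b _; ring.
Qed.

Lemma Vadj_fixed_sum_conj k b c : \sum_a (e a)^* * V (a,k) (b,c) = (c == k)%:R * (e b)^*.
Proof.
have := congr1 (@Num.conj C) (Vadj_fixed_sum b c k).
rewrite rmorph_sum rmorphM /= rmorph_nat => <-.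
by apply: eq_bigr => a _; rewrite rmorphM /= conjCK mulrC.
Qed.

Lemma scale_e_of_fixed_sum (xi : vec C I) :
  (forall i k l, \sum_j V (i,k) (j,l) * xi j = (k == l)%:R * xi i) ->
  exists c, xi = vscale c e.
Proof.
move=> h; apply: hmult => eta.
apply: functional_extensionality => -[i k].
rewrite /opapp /vtens sum_pair /= exchange_big /=.
transitivity (\sum_b (\sum_a V (i,k) (a,b) * xi a) * eta b).
  by apply: eq_bigr => b _; rewrite mulr_suml; apply: eq_bigr => a _; ring.
under eq_bigr do rewrite h.
rewrite (bigD1 k) //= eqxx mul1r big1 ?addr0 // => b /negbTE.
by rewrite eq_sym => ->; rewrite mul0r mul0r.
Qed.

Definition rho_ee i j := \sum_k \sum_l (e k)^* * V (i,k) (j,l) * e l.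

Lemma rho_ee_invariant i j k l : \sum_m rho_ee i m * V (m,k) (j,l) = (k == l)%:R * rho_ee i j.
Proof.
rewrite /rho_ee.
transitivity (\sum_a \sum_b (e a)^* * e b * \sum_m V (i,a) (m,b) * V (m,k) (j,l)).
  under eq_bigr do rewrite mulr_suml.
  rewrite exchange_big; apply: eq_bigr => a _.
  under eq_bigr do rewrite mulr_suml.
  rewrite exchange_big; apply: eq_bigr => b _.
  by rewrite mulr_sumr; apply: eq_bigr => m _; ring.
under eq_bigr do under eq_bigr do rewrite pentagon_sum12 //.
transitivity (\sum_a \sum_b \sum_b' \sum_c \sum_b1
   ((e a)^* * V (a,k) (b1,c)) * (e b * (V (b,l) (b',c))^*) * V (i,b1) (j,b')).
  apply: eq_bigr => a _; apply: eq_bigr => b _.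
  rewrite mulr_sumr; apply: eq_bigr => b' _.
  rewrite mulr_sumr; apply: eq_bigr => c _.
  rewrite big_distrl big_distrr /=; apply: eq_bigr => b1 _; ring.
under eq_bigr do rewrite sum_rot4.
rewrite sum_rot5.
transitivity (\sum_b' \sum_c \sum_b1 ((c == k)%:R * (e b1)^*) * ((c == l)%:R * e b') * V (i,b1) (j,b')).
  apply: eq_bigr => b' _; apply: eq_bigr => c _; apply: eq_bigr => b1 _.
  rewrite -Vadj_fixed_sum_conj -(Vadj_fixed_sum b' c l) mulr_sumr.
  rewrite mulr_suml; apply: eq_bigr => w _; rewrite -mulrA mulr_suml.
  by apply: eq_bigr => a _; ring.
transitivity (\sum_b' \sum_b1 \sum_c (c == k)%:R * ((c == l)%:R * ((e b1)^* * V (i,b1) (j,b') * e b'))).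
  apply: eq_bigr => b' _; rewrite exchange_big; apply: eq_bigr => b1 _.
  by apply: eq_bigr => c _; ring.
under eq_bigr do under eq_bigr do rewrite sum_indicl.
rewrite exchange_big mulr_sumr; apply: eq_bigr => b1 _.
by rewrite mulr_sumr; apply: eq_bigr => b' _.
Qed.

Lemma scale_e_of_adj_fixed_sum (u : vec C I) :
  (forall k j l, \sum_m (V (m,k) (j,l))^* * u m = (k == l)%:R * u j) ->
  exists c, u = vscale c e.
Proof.
move=> h; apply: scale_e_of_fixed_sum => i0 k0 k.
have hv : opapp (opadj V) (vtens u (basis C k)) = vtens u (basis C k).
  apply: functional_extensionality => -[j l].
  rewrite /opapp /opadj /vtens /basis sum_pair /=.
  transitivity (\sum_m (V (m,k) (j,l))^* * u m).
    apply: eq_bigr => m _.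
    transitivity (\sum_b (V (m,b) (j,l))^* * u m * (b == k)%:R); last by rewrite sum_indicr.
    by apply: eq_bigr => b _; ring.
  by rewrite h eq_sym mulrC.
have hv2 : opapp V (vtens u (basis C k)) = vtens u (basis C k).
  by rewrite -{1}hv unitary_app_adj.
have := congr1 (fun v => v (i0,k0)) hv2.
rewrite /opapp /vtens /basis sum_pair /= => h2.
rewrite mulrC -h2; apply: eq_bigr => a _.
transitivity (\sum_b V (i0,k0) (a,b) * u a * (b == k)%:R); first by rewrite sum_indicr.
by apply: eq_bigr => b _; ring.
Qed.

Lemma rho_ee_e i : \sum_j rho_ee i j * e j = e i.
Proof.
rewrite /rho_ee.
transitivity (\sum_k \sum_l (e k)^* * e l * \sum_j V (i,k) (j,l) * e j).
  under eq_bigr do rewrite mulr_suml.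
  rewrite exchange_big; apply: eq_bigr => k _.
  under eq_bigr do rewrite mulr_suml.
  rewrite exchange_big; apply: eq_bigr => l _.
  by rewrite mulr_sumr; apply: eq_bigr => m _; ring.
under eq_bigr do under eq_bigr do rewrite V_fixed_sum.
transitivity (\sum_k \sum_l (k == l)%:R * ((e k)^* * e l * e i)).
  by apply: eq_bigr => k _; apply: eq_bigr => l _; ring.
under eq_bigr do rewrite sum_indicl_sym.
rewrite -mulr_suml.
have -> : \sum_k (e k)^* * e k = 1 by exact: he1.
by rewrite mul1r.
Qed.

Lemma rho_eeE i j : rho_ee i j = e i * (e j)^*.
Proof.
have [c hc] : exists c, (fun j => (rho_ee i j)^*) = vscale c e.
  apply: scale_e_of_adj_fixed_sum => k j0 l.
  have := congr1 (@Num.conj C) (rho_ee_invariant i j0 k l).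
  rewrite rmorph_sum rmorphM /= rmorph_nat => <-.
  by apply: eq_bigr => m _; rewrite rmorphM /= mulrC.
have hR : forall j, rho_ee i j = c^* * (e j)^*.
  move=> j0; have := congr1 (fun f => (f j0)^*) hc; rewrite /vscale /= conjCK => ->.
  by rewrite rmorphM.
have := rho_ee_e i; under eq_bigr do rewrite hR.
move=> h.
have hc' : c^* = e i.
  rewrite -h -[LHS]mulr1 -he1 /inner mulr_sumr; apply: eq_bigr => k _; ring.
by rewrite hR hc'.
Qed.

Definition trace2 i j := \sum_k V (i,k) (j,k).
Definition trace1 k l := \sum_i V (i,k) (i,l).
Let n : C := #|I|%:R.

Lemma sum_const_n (x : C) : \sum_(c : I) x = n * x.
Proof. by rewrite sumr_const /n mulr_natl. Qed.

Lemma trace2_sq i j : \sum_m trace2 i m * trace2 m j = n * trace2 i j.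
Proof.
rewrite /trace2.
transitivity (\sum_k \sum_k' \sum_m V (i,k) (m,k) * V (m,k') (j,k')).
  under eq_bigr do rewrite mulr_suml.
  rewrite exchange_big; apply: eq_bigr => k _.
  under eq_bigr do rewrite mulr_sumr.
  by rewrite exchange_big.
under eq_bigr do under eq_bigr do rewrite pentagon_sum12 //.
transitivity (\sum_k \sum_k' \sum_b' \sum_c \sum_b
   (V (k,k') (b',c))^* * V (k,k') (b,c) * V (i,b) (j,b')).
  apply: eq_bigr => k _; apply: eq_bigr => k' _; apply: eq_bigr => b' _.
  apply: eq_bigr => c _; rewrite mulr_suml; apply: eq_bigr => b _; ring.
under eq_bigr do rewrite sum_rot4.
rewrite sum_rot4.
transitivity (\sum_b' \sum_(c : I) \sum_b ((b' == b) && (c == c))%:R * V (i,b) (j,b')).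
  apply: eq_bigr => b' _; apply: eq_bigr => c _; apply: eq_bigr => b _.
  by rewrite -(unitary_sum_adj_mul hMU) mulr_suml; apply: eq_bigr => k _; rewrite mulr_suml.
transitivity (\sum_(c : I) \sum_b' \sum_b (b' == b)%:R * V (i,b) (j,b')).
  rewrite exchange_big; apply: eq_bigr => c _; apply: eq_bigr => b' _.
  by apply: eq_bigr => b _; rewrite eqxx andbT.
rewrite sum_const_n; congr (_ * _).
rewrite exchange_big; apply: eq_bigr => b _.
by rewrite sum_indicl.
Qed.

Lemma trace1_sq k l : \sum_m trace1 k m * trace1 m l = n * trace1 k l.
Proof.
rewrite /trace1.
transitivity (\sum_i \sum_i' \sum_m V (i,k) (i,m) * V (i',m) (i',l)).
  under eq_bigr do rewrite mulr_suml.
  rewrite exchange_big; apply: eq_bigr => i _.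
  under eq_bigr do rewrite mulr_sumr.
  by rewrite exchange_big.
under eq_bigr do under eq_bigr do rewrite pentagon_sum13 //.
transitivity (\sum_i \sum_i' \sum_a \sum_b' \sum_b
   V (a,b') (i,i') * (V (a,b) (i,i'))^* * V (b,k) (b',l)).
  apply: eq_bigr => i _; apply: eq_bigr => i' _; apply: eq_bigr => a _.
  apply: eq_bigr => b' _; rewrite mulr_suml; apply: eq_bigr => b _; ring.
under eq_bigr do rewrite sum_rot4.
rewrite sum_rot4.
transitivity (\sum_(a : I) \sum_b' \sum_b ((a == a) && (b' == b))%:R * V (b,k) (b',l)).
  apply: eq_bigr => a _; apply: eq_bigr => b' _; apply: eq_bigr => b _.
  by rewrite -(unitary_sum_mul_adj hMU) mulr_suml; apply: eq_bigr => i _; rewrite mulr_suml.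
transitivity (\sum_(a : I) \sum_b V (b,k) (b,l)); last by rewrite sum_const_n.
apply: eq_bigr => a _.
transitivity (\sum_b' \sum_b (b' == b)%:R * V (b,k) (b',l)).
  by apply: eq_bigr => b' _; apply: eq_bigr => b _; rewrite eqxx.
rewrite exchange_big; apply: eq_bigr => b _.
by rewrite sum_indicl.
Qed.

Lemma inner_V_basisr (x y : vec C I) l l' :
  inner (vtens x (basis C l)) (opapp V (vtens y (basis C l'))) =
  \sum_a \sum_a' (x a)^* * V (a,l) (a',l') * y a'.
Proof.
rewrite /inner /opapp /vtens /basis !sum_pair.
transitivity (\sum_a \sum_b (b == l)%:R * ((x a)^* *
   \sum_a' \sum_b' V (a,b) (a',b') * y a' * (b' == l')%:R)).
  apply: eq_bigr => a _; apply: eq_bigr => b _.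
  rewrite rmorphM /= rmorph_nat sum_pair; under [in RHS]eq_bigr do under eq_bigr do rewrite -mulrA.
  by rewrite /=; ring.
under eq_bigr do rewrite sum_indicl.
apply: eq_bigr => a _; rewrite mulr_sumr; apply: eq_bigr => a' _.
by rewrite sum_indicr mulrA.
Qed.

Lemma inner_V_basisl (x y : vec C I) j j' :
  inner (vtens (basis C j) x) (opapp V (vtens (basis C j') y)) =
  \sum_b \sum_b' (x b)^* * V (j,b) (j',b') * y b'.
Proof.
rewrite /inner /opapp /vtens /basis !sum_pair.
transitivity (\sum_a \sum_b (a == j)%:R * ((x b)^* *
   \sum_a' \sum_b' (a' == j')%:R * (V (a,b) (a',b') * y b'))).
  apply: eq_bigr => a _; apply: eq_bigr => b _.
  rewrite rmorphM /= rmorph_nat sum_pair -mulrA; congr (_ * (_ * _)).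
  by apply: eq_bigr => a' _; apply: eq_bigr => b' _; ring.
under eq_bigr do rewrite -mulr_sumr.
rewrite sum_indicl; apply: eq_bigr => b _.
under eq_bigr do rewrite -mulr_sumr.
by rewrite sum_indicl mulr_sumr; apply: eq_bigr => b' _; rewrite mulrA.
Qed.

Lemma trace2_fixed j l :
  opapp V (vtens (fun a => trace2 a j) (basis C l)) = vtens (fun a => trace2 a j) (basis C l).
Proof.
pose u (s : I * I) := vtens (fun a => trace2 a s.1) (basis C s.2).
apply: (unitary_fixed_family (u := u) hU _ (j,l)).
rewrite !sum_pair.
under eq_bigr do under eq_bigr do rewrite inner_V_basisr.
under [in RHS]eq_bigr do under eq_bigr do rewrite inner_vtens inner_basis_self mulr1.
apply: eq_bigr => j0 _.
transitivity (\sum_(i : I) \sum_a \sum_a' (trace2 a j0)^* * V (a,i) (a',i) * trace2 a' j0); first by [].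
transitivity (\sum_(i : I) inner (fun a => trace2 a j0) (fun a => trace2 a j0)); last by [].
rewrite sum_const_n.
transitivity (\sum_a \sum_a' (trace2 a j0)^* * (\sum_l0 V (a,l0) (a',l0)) * trace2 a' j0).
  rewrite sum_rot3; apply: eq_bigr => a _; apply: eq_bigr => a' _.
  by rewrite -mulr_suml -mulr_sumr.
rewrite /inner mulr_sumr; apply: eq_bigr => a _.
rewrite mulrCA -trace2_sq mulr_sumr; apply: eq_bigr => a' _.
by rewrite /trace2; ring.
Qed.

(* Multiplicity one: each column of trace2 is V-fixed, hence a multiple of e. *)
Lemma trace2E a j : trace2 a j = n * e a * (e j)^*.
Proof.
have [c hc] : exists c, (fun a => trace2 a j) = vscale c e.
  apply: scale_e_of_fixed_sum => i k l.
  have := congr1 (fun v => v (i,k)) (trace2_fixed j l).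
  rewrite /opapp /vtens /basis sum_pair /= => h.
  rewrite mulrC -h; apply: eq_bigr => a0 _.
  transitivity (\sum_b V (i,k) (a0,b) * trace2 a0 j * (b == l)%:R); first by rewrite sum_indicr.
  by apply: eq_bigr => b _; ring.
have hT : forall a, trace2 a j = c * e a by move=> a0; move/(congr1 (fun f => f a0)): hc.
have hce : \sum_a (e a)^* * trace2 a j = n * (e j)^*.
  rewrite /trace2; under eq_bigr do rewrite mulr_sumr.
  rewrite exchange_big /=.
  under eq_bigr do rewrite Vadj_fixed_sum_conj eqxx mul1r.
  by rewrite sum_const_n.
have hcc : c = n * (e j)^*.
  rewrite -hce; under eq_bigr do rewrite hT.
  by rewrite -[LHS]mulr1 -he1 /inner mulr_sumr; apply: eq_bigr => k _; ring.
by rewrite hT hcc; ring.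
Qed.

Lemma trace1_fixed j l :
  opapp V (vtens (basis C j) (fun m => trace1 m l)) = vtens (basis C j) (fun m => trace1 m l).
Proof.
pose u (s : I * I) := vtens (basis C s.1) (fun m => trace1 m s.2).
apply: (unitary_fixed_family (u := u) hU _ (j,l)).
rewrite !sum_pair.
under eq_bigr do under eq_bigr do rewrite inner_V_basisl.
under [in RHS]eq_bigr do under eq_bigr do rewrite inner_vtens inner_basis_self mul1r.
transitivity (\sum_(j0 : I) \sum_(l0 : I) \sum_b \sum_b' (trace1 b l0)^* * V (j0,b) (j0,b') * trace1 b' l0);
  first by [].
transitivity (\sum_(j0 : I) \sum_(l0 : I) inner (fun m => trace1 m l0) (fun m => trace1 m l0)); last by [].
rewrite [LHS]exchange_big [RHS]exchange_big; apply: eq_bigr => l0 _.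
rewrite sum_const_n sum_rot3.
transitivity (\sum_b \sum_b' (trace1 b l0)^* * (\sum_j0 V (j0,b) (j0,b')) * trace1 b' l0).
  apply: eq_bigr => b _; apply: eq_bigr => b' _.
  by rewrite -mulr_suml -mulr_sumr.
rewrite /inner mulr_sumr; apply: eq_bigr => b _.
rewrite mulrCA -trace1_sq mulr_sumr; apply: eq_bigr => b' _.
by rewrite /trace1; ring.
Qed.

Lemma trace1_fixed_sum i k j l : \sum_b' V (i,k) (j,b') * trace1 b' l = (i == j)%:R * trace1 k l.
Proof.
have := congr1 (fun v => v (i,k)) (trace1_fixed j l).
rewrite /opapp /vtens /basis sum_pair => h.
transitivity ((i == j)%:R * trace1 k l); last by [].
rewrite -h; symmetry.
transitivity (\sum_a (a == j)%:R * \sum_b V (i,k) (a,b) * trace1 b l); last by rewrite sum_indicl.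
by apply: eq_bigr => a _; rewrite mulr_sumr; apply: eq_bigr => b _; ring.
Qed.

Lemma optr_trace1 : \sum_k trace1 k k = n.
Proof.
rewrite /trace1 exchange_big /=.
transitivity (\sum_i trace2 i i); first by [].
under eq_bigr do rewrite trace2E -mulrA.
rewrite -mulr_sumr -[RHS]mulr1 -he1 /inner; congr (_ * _).
by apply: eq_bigr => i _; rewrite mulrC.
Qed.

(* L(omega) for the functional omega(T) = sum_ij W_ij T_ij; every slice map
   of a linear functional has this form (Lsl_Lw). *)
Definition Lw (W : op C I) : op C I := fun k l => \sum_i \sum_j W i j * V (i,k) (j,l).

Definition convw (W1 W2 : op C I) : op C I := fun b b' =>
  \sum_a \sum_i \sum_j \sum_i' \sum_j' W1 i j * W2 i' j' * (V (a,b) (i,i'))^* * V (a,b') (j,j').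

Lemma Lw_mul (W1 W2 : op C I) : opmul (Lw W1) (Lw W2) = Lw (convw W1 W2).
Proof.
apply: functional_extensionality => k; apply: functional_extensionality => l.
rewrite /opmul /Lw /convw.
transitivity (\sum_i \sum_j \sum_i' \sum_j' W1 i j * W2 i' j' *
              \sum_m V (i,k) (j,m) * V (i',m) (j',l)).
  under eq_bigr do rewrite mulr_suml.
  rewrite exchange_big; apply: eq_bigr => i _.
  under eq_bigr do rewrite mulr_suml.
  rewrite exchange_big; apply: eq_bigr => j _.
  under eq_bigr do rewrite mulr_sumr.
  rewrite exchange_big; apply: eq_bigr => i' _.
  under eq_bigr do rewrite mulr_sumr.
  rewrite exchange_big; apply: eq_bigr => j' _.
  by rewrite mulr_sumr; apply: eq_bigr => m _; ring.
under eq_bigr do under eq_bigr do under eq_bigr do under eq_bigr do rewrite pentagon_sum13 //.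
transitivity (\sum_i \sum_j \sum_i' \sum_j' \sum_a \sum_b' \sum_b
   W1 i j * W2 i' j' * (V (a,b) (i,i'))^* * V (a,b') (j,j') * V (b,k) (b',l)).
  apply: eq_bigr => i _; apply: eq_bigr => j _; apply: eq_bigr => i' _; apply: eq_bigr => j' _.
  rewrite mulr_sumr; apply: eq_bigr => a _.
  rewrite mulr_sumr; apply: eq_bigr => b' _.
  rewrite mulr_suml mulr_sumr; apply: eq_bigr => b _; ring.
rewrite sum_shift4_of7.
transitivity (\sum_b' \sum_b \sum_a \sum_i \sum_j \sum_i' \sum_j'
   W1 i j * W2 i' j' * (V (a,b) (i,i'))^* * V (a,b') (j,j') * V (b,k) (b',l)).
  exact: sum_rot3.
rewrite exchange_big; apply: eq_bigr => b _; apply: eq_bigr => b' _.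
rewrite mulr_suml; apply: eq_bigr => a _.
rewrite mulr_suml; apply: eq_bigr => i _.
rewrite mulr_suml; apply: eq_bigr => j _.
rewrite mulr_suml; apply: eq_bigr => i' _.
by rewrite mulr_suml; apply: eq_bigr => j' _.
Qed.

Lemma inner_e_Lw (W : op C I) : inner e (opapp (Lw W) e) = \sum_i \sum_j W i j * (e i * (e j)^*).
Proof.
rewrite /inner /opapp /Lw.
transitivity (\sum_i \sum_j W i j * rho_ee i j); last first.
  by apply: eq_bigr => i _; apply: eq_bigr => j _; rewrite rho_eeE.
rewrite /rho_ee.
transitivity (\sum_k \sum_l \sum_i \sum_j W i j * ((e k)^* * V (i,k) (j,l) * e l)).
  apply: eq_bigr => k _; rewrite mulr_sumr; apply: eq_bigr => l _.
  rewrite mulr_suml mulr_sumr; apply: eq_bigr => i _.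
  rewrite mulr_suml mulr_sumr; apply: eq_bigr => j _; ring.
under eq_bigr do rewrite sum_rot3.
rewrite sum_rot3; apply: eq_bigr => i _; apply: eq_bigr => j _.
rewrite mulr_sumr; apply: eq_bigr => k _.
by rewrite mulr_sumr.
Qed.

Lemma optr_Lw (W : op C I) : optr (Lw W) = n * inner e (opapp (Lw W) e).
Proof.
rewrite inner_e_Lw /optr /Lw.
rewrite sum_rot3 mulr_sumr; apply: eq_bigr => i _.
rewrite mulr_sumr; apply: eq_bigr => j _.
transitivity (W i j * trace2 i j); first by rewrite /trace2 mulr_sumr.
by rewrite trace2E; ring.
Qed.

Definition delta_op (i j : I) : op C I := fun a b => (a == i)%:R * (b == j)%:R.

Lemma lin_functional_sum (w : op C I -> C) (T : finType) (F : T -> op C I) :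
  lin_functional w -> w (fun a b => \sum_x F x a b) = \sum_x w (F x).
Proof.
move=> [hadd hsc].
have h0 : w (fun _ _ => 0) = 0.
  have -> : (fun _ _ => 0) = opscale 0 (fun _ _ : I => (0 : C)).
    by apply: functional_extensionality => a; apply: functional_extensionality => b;
       rewrite /opscale mul0r.
  by rewrite hsc mul0r.
elim: (index_enum T) => [|x r IH].
  rewrite big_nil -h0; congr w.
  by apply: functional_extensionality => a; apply: functional_extensionality => b; rewrite big_nil.
rewrite big_cons -IH -hadd; congr w.
by apply: functional_extensionality => a; apply: functional_extensionality => b; rewrite big_cons.
Qed.

Lemma lin_functional_coef (w : op C I -> C) (M : op C I) :
  lin_functional w -> w M = \sum_i \sum_j w (delta_op i j) * M i j.
Proof.
move=> hw.
have hM : M = fun a b => \sum_i \sum_j opscale (M i j) (delta_op i j) a b.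
  apply: functional_extensionality => a; apply: functional_extensionality => b.
  rewrite /opscale /delta_op.
  transitivity (\sum_i (i == a)%:R * \sum_j (j == b)%:R * M i j); last first.
    apply: eq_bigr => i _; rewrite mulr_sumr; apply: eq_bigr => j _.
    by rewrite (eq_sym a) (eq_sym b); ring.
  rewrite sum_indicl; symmetry.
  by under eq_bigr do rewrite mulrC; rewrite sum_indicr.
rewrite {1}hM (lin_functional_sum (fun i => fun a b => \sum_j opscale (M i j) (delta_op i j) a b)) //.
apply: eq_bigr => i _.
rewrite (lin_functional_sum (fun j => opscale (M i j) (delta_op i j))) //.
by apply: eq_bigr => j _; rewrite hw.2 mulrC.
Qed.

Lemma Lsl_Lw (w : op C I -> C) : lin_functional w -> Lsl V w = Lw (fun i j => w (delta_op i j)).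
Proof.
move=> hw; apply: functional_extensionality => k; apply: functional_extensionality => l.
by rewrite /Lsl (lin_functional_coef _ hw).
Qed.

Lemma Lsl_omegaE (x y : vec C I) : Lsl V (omega x y) = Lw (fun i j => (x i)^* * y j).
Proof.
apply: functional_extensionality => k; apply: functional_extensionality => l.
rewrite /Lsl /omega /inner /opapp /Lw; apply: eq_bigr => i _.
by rewrite mulr_sumr; apply: eq_bigr => j _; ring.
Qed.

Lemma rhoE (x y : vec C I) i j :
  rho V (omega x y) i j = \sum_k \sum_l (x k)^* * V (i,k) (j,l) * y l.
Proof.
rewrite /rho /omega /inner /opapp; apply: eq_bigr => k _.
by rewrite mulr_sumr; apply: eq_bigr => l _; ring.
Qed.

Lemma inner_rho_omega (a b x y : vec C I) :
  inner x (opapp (rho V (omega a b)) y) = inner (vtens x a) (opapp V (vtens y b)).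
Proof.
transitivity (\sum_i \sum_k \sum_j \sum_l (x i)^* * (a k)^* * V (i,k) (j,l) * y j * b l).
  rewrite /inner /opapp; apply: eq_bigr => i _.
  transitivity (\sum_j \sum_k \sum_l (x i)^* * (a k)^* * V (i,k) (j,l) * y j * b l);
    last exact: exchange_big.
  rewrite mulr_sumr; apply: eq_bigr => j _; rewrite rhoE.
  rewrite mulr_suml mulr_sumr; apply: eq_bigr => k _.
  rewrite mulr_suml mulr_sumr; apply: eq_bigr => l _; ring.
rewrite /inner /opapp /vtens sum_pair; apply: eq_bigr => i _; apply: eq_bigr => k _.
rewrite mulr_sumr sum_pair; apply: eq_bigr => j _.
by apply: eq_bigr => l _; rewrite rmorphM /=; ring.
Qed.

Lemma inner_Lw_dens (a b x y : vec C I) :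
  inner x (opapp (Lw (fun i j => (a i)^* * b j)) y) = inner (vtens a x) (opapp V (vtens b y)).
Proof.
transitivity (\sum_k \sum_i \sum_l \sum_j (x k)^* * (a i)^* * V (i,k) (j,l) * y l * b j).
  rewrite /inner /opapp; apply: eq_bigr => k _.
  transitivity (\sum_l \sum_i \sum_j (x k)^* * (a i)^* * V (i,k) (j,l) * y l * b j);
    last exact: exchange_big.
  rewrite mulr_sumr; apply: eq_bigr => l _; rewrite /Lw.
  rewrite mulr_suml mulr_sumr; apply: eq_bigr => i _.
  rewrite mulr_suml mulr_sumr; apply: eq_bigr => j _; ring.
rewrite exchange_big /inner /opapp /vtens sum_pair; apply: eq_bigr => i _; apply: eq_bigr => k _.
rewrite mulr_sumr sum_pair /= exchange_big; apply: eq_bigr => l _.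
by apply: eq_bigr => j _; rewrite rmorphM /=; ring.
Qed.

Lemma nI_neq0 : n != 0.
Proof.
rewrite /n pnatr_eq0 -lt0n; apply/card_gt0P.
case: (pickP (fun _ : I => true)) => [i _|h]; first by exists i.
exfalso.
have h0 : inner e e = 0 by rewrite /inner big1 // => i _; have := h i.
by move: he1; rewrite h0 => /eqP; rewrite eq_sym oner_eq0.
Qed.

Lemma trace2_orthogonality l l' :
  \sum_k \sum_k' trace2 k k' * (\sum_i \sum_j (V (i,k) (j,l))^* * V (i,k') (j,l')) = (l == l')%:R * n.
Proof.
transitivity (\sum_k \sum_k' \sum_m \sum_i \sum_j
   (V (i,k) (j,l))^* * V (k,m) (k',m) * V (i,k') (j,l')).
  apply: eq_bigr => k _; apply: eq_bigr => k' _; rewrite /trace2 mulr_suml.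
  apply: eq_bigr => m _; rewrite mulr_sumr; apply: eq_bigr => i _.
  rewrite mulr_sumr; apply: eq_bigr => j _; ring.
under eq_bigr do rewrite sum_rot4.
rewrite sum_rot5.
transitivity (\sum_m \sum_j \sum_i \sum_k' \sum_k
   (V (i,k) (j,l))^* * V (k,m) (k',m) * V (i,k') (j,l')).
  by apply: eq_bigr => m _; rewrite exchange_big.
transitivity (\sum_m \sum_j \sum_m' V (j,m) (j,m') * V (l,m') (l',m)).
  apply: eq_bigr => m _; apply: eq_bigr => j _; rewrite pentagon_sum13 //.
  apply: eq_bigr => i _; apply: eq_bigr => k' _.
  by rewrite mulr_suml.
transitivity (\sum_m' \sum_m V (l,m') (l',m) * trace1 m m').
  under eq_bigr do rewrite exchange_big.
  rewrite exchange_big; apply: eq_bigr => m' _; apply: eq_bigr => m _.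
  by rewrite /trace1 mulr_sumr; apply: eq_bigr => j _; rewrite mulrC.
under eq_bigr do rewrite trace1_fixed_sum.
by rewrite -mulr_sumr optr_trace1.
Qed.

Lemma rho_plancherel (g : vec C I) :
  \sum_i \sum_j (rho V (omega e g) i j)^* * rho V (omega e g) i j = inner g g.
Proof.
apply: (mulfI nI_neq0).
transitivity (n * \sum_i \sum_j \sum_k \sum_l \sum_k' \sum_l'
    (g l)^* * g l' * ((e k * (e k')^*) * ((V (i,k) (j,l))^* * V (i,k') (j,l')))).
  congr (_ * _); apply: eq_bigr => i _; apply: eq_bigr => j _.
  rewrite !rhoE rmorph_sum mulr_suml; apply: eq_bigr => k _.
  rewrite rmorph_sum mulr_suml; apply: eq_bigr => l _.
  rewrite mulr_sumr; apply: eq_bigr => k' _.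
  rewrite mulr_sumr; apply: eq_bigr => l' _.
  by rewrite !rmorphM /= conjCK; ring.
rewrite sum_perm6.
transitivity (\sum_l \sum_l' (g l)^* * g l' * ((l == l')%:R * n)).
  rewrite mulr_sumr; apply: eq_bigr => l _.
  rewrite mulr_sumr; apply: eq_bigr => l' _.
  rewrite -trace2_orthogonality [LHS]mulr_sumr [RHS]mulr_sumr; apply: eq_bigr => k _.
  rewrite [LHS]mulr_sumr [RHS]mulr_sumr; apply: eq_bigr => k' _.
  rewrite trace2E !mulr_sumr; apply: eq_bigr => i _.
  rewrite !mulr_sumr; apply: eq_bigr => j _; ring.
rewrite /inner mulr_sumr; apply: eq_bigr => l _.
transitivity (\sum_l' (l' == l)%:R * ((g l)^* * g l' * n)).
  by apply: eq_bigr => l' _; rewrite eq_sym; ring.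
by rewrite sum_indicl; ring.
Qed.

Lemma sum4_mul (A B : I -> I -> C) :
  \sum_k \sum_l \sum_k' \sum_l' A k k' * B l l' = (\sum_k \sum_k' A k k') * (\sum_l \sum_l' B l l').
Proof.
under eq_bigr do rewrite exchange_big.
rewrite mulr_suml; apply: eq_bigr => k _.
rewrite mulr_suml; apply: eq_bigr => k' _.
rewrite mulr_sumr; apply: eq_bigr => l _.
by rewrite mulr_sumr.
Qed.

Lemma Vadj_fixed_ee b c : \sum_k \sum_k' (e k)^* * (e k')^* * V (k,k') (b,c) = (e b)^* * (e c)^*.
Proof.
rewrite exchange_big /=.
transitivity (\sum_k' (e k')^* * \sum_k (e k)^* * V (k,k') (b,c)).
  by apply: eq_bigr => k' _; rewrite mulr_sumr; apply: eq_bigr => k _; ring.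
under eq_bigr do rewrite Vadj_fixed_sum_conj.
transitivity (\sum_k' (k' == c)%:R * ((e k')^* * (e b)^*)).
  by apply: eq_bigr => k' _; rewrite eq_sym; ring.
by rewrite sum_indicl mulrC.
Qed.

Definition rho_prod_vec (g1 g2 : vec C I) : vec C I :=
  fun b' => \sum_c (e c)^* * opapp (opadj V) (vtens g1 g2) (b',c).

Lemma rho_omega_mul (g1 g2 : vec C I) :
  opmul (rho V (omega e g1)) (rho V (omega e g2)) = rho V (omega e (rho_prod_vec g1 g2)).
Proof.
apply: functional_extensionality => i; apply: functional_extensionality => j.
rewrite /opmul rhoE.
transitivity (\sum_k \sum_l \sum_k' \sum_l' \sum_b' \sum_c \sum_b
  ((e k)^* * (e k')^* * V (k,k') (b,c)) * ((V (l,l') (b',c))^* * g1 l * g2 l') * V (i,b) (j,b')).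
  transitivity (\sum_k \sum_l \sum_k' \sum_l' (e k)^* * (e k')^* * g1 l * g2 l' *
                 \sum_m V (i,k) (m,l) * V (m,k') (j,l')).
    transitivity (\sum_m \sum_k \sum_l \sum_k' \sum_l'
       (e k)^* * (e k')^* * g1 l * g2 l' * (V (i,k) (m,l) * V (m,k') (j,l'))).
      apply: eq_bigr => m _; rewrite !rhoE mulr_suml; apply: eq_bigr => k _.
      rewrite mulr_suml; apply: eq_bigr => l _.
      rewrite mulr_sumr; apply: eq_bigr => k' _.
      rewrite mulr_sumr; apply: eq_bigr => l' _; ring.
    rewrite sum_rot5; apply: eq_bigr => k _; apply: eq_bigr => l _.
    apply: eq_bigr => k' _; apply: eq_bigr => l' _.
    by rewrite mulr_sumr.
  apply: eq_bigr => k _; apply: eq_bigr => l _; apply: eq_bigr => k' _; apply: eq_bigr => l' _.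
  rewrite pentagon_sum12 // mulr_sumr; apply: eq_bigr => b' _.
  rewrite mulr_sumr; apply: eq_bigr => c _.
  rewrite mulr_suml mulr_sumr; apply: eq_bigr => b _; ring.
rewrite sum_shift4_of7.
transitivity (\sum_b' \sum_c \sum_b
  (e b)^* * (e c)^* * opapp (opadj V) (vtens g1 g2) (b',c) * V (i,b) (j,b')).
  apply: eq_bigr => b' _; apply: eq_bigr => c _; apply: eq_bigr => b _.
  rewrite -Vadj_fixed_ee.
  transitivity ((\sum_k \sum_l \sum_k' \sum_l'
     ((e k)^* * (e k')^* * V (k,k') (b,c)) * ((V (l,l') (b',c))^* * g1 l * g2 l')) * V (i,b) (j,b')).
    rewrite mulr_suml; apply: eq_bigr => k _; rewrite mulr_suml; apply: eq_bigr => l _.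
    by rewrite mulr_suml; apply: eq_bigr => k' _; rewrite mulr_suml.
  rewrite (sum4_mul (fun k k' => (e k)^* * (e k')^* * V (k,k') (b,c))
                      (fun l l' => (V (l,l') (b',c))^* * g1 l * g2 l')).
  congr (_ * _ * _); rewrite /opapp /opadj /vtens sum_pair; apply: eq_bigr => l _.
  by apply: eq_bigr => l' _; ring.
rewrite /rho_prod_vec -sum_rot3; apply: eq_bigr => b _; apply: eq_bigr => b' _.
rewrite mulr_sumr; apply: eq_bigr => c _; ring.
Qed.

Lemma inner_e_Lw_of_optr (W1 W2 : op C I) :
  optr (Lw W1) = optr (Lw W2) -> inner e (opapp (Lw W1) e) = inner e (opapp (Lw W2) e).
Proof. by move=> h; apply: (mulfI nI_neq0); rewrite -!optr_Lw. Qed.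

Lemma rho_omega_delta_op (a b : vec C I) i j :
  rho V (omega a b) i j = inner a (opapp (Lw (delta_op i j)) b).
Proof.
rewrite rhoE /inner /opapp /Lw; apply: eq_bigr => k _.
rewrite mulr_sumr; apply: eq_bigr => l _.
have -> : \sum_i0 \sum_j0 delta_op i j i0 j0 * V (i0,k) (j0,l) = V (i,k) (j,l).
  rewrite /delta_op.
  transitivity (\sum_i0 (i0 == i)%:R * \sum_j0 (j0 == j)%:R * V (i0,k) (j0,l)).
    by apply: eq_bigr => i0 _; rewrite mulr_sumr; apply: eq_bigr => j0 _; ring.
  rewrite sum_indicl; exact: sum_indicl.
ring.
Qed.

Section ProjCyclic.
Variable W : op C I.
Hypothesis hp : orth_proj (Lw W).
Let p := Lw W.
Let psi := opapp p e.

(* Traciality of the vector state of e on slices, used with p^2 = p. *)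
Lemma inner_e_Lw_proj (Y : op C I) :
  inner e (opapp (Lw Y) psi) = inner psi (opapp (Lw Y) psi).
Proof.
rewrite /psi -opapp_mul inner_adjl hp.1 -!opapp_mul.
rewrite /p !Lw_mul; apply: inner_e_Lw_of_optr.
by rewrite -!Lw_mul [RHS]optrC -opmulA hp.2.
Qed.

Lemma inner_proj_Lw_e (Y : op C I) :
  inner psi (opapp (Lw Y) e) = inner e (opapp (Lw Y) psi).
Proof.
rewrite /psi inner_adjl hp.1 -!opapp_mul.
rewrite /p !Lw_mul; apply: inner_e_Lw_of_optr.
by rewrite -!Lw_mul optrC.
Qed.

Lemma rho_omega_e_proj : rho V (omega e psi) = rho V (omega psi psi).
Proof.
apply: functional_extensionality => i; apply: functional_extensionality => j.
by rewrite !rho_omega_delta_op inner_e_Lw_proj.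
Qed.

Lemma rho_omega_proj_e : rho V (omega psi e) = rho V (omega e psi).
Proof.
apply: functional_extensionality => i; apply: functional_extensionality => j.
by rewrite !rho_omega_delta_op inner_proj_Lw_e.
Qed.

End ProjCyclic.

Lemma trace1_Lw : (fun k l => trace1 k l) = Lw op1.
Proof.
apply: functional_extensionality => k; apply: functional_extensionality => l.
rewrite /trace1 /Lw /op1; apply: eq_bigr => i _.
by rewrite (eq_bigr (fun j => (j == i)%:R * V (i,k) (j,l))) ?sum_indicl // => j _; rewrite eq_sym.
Qed.

Lemma Lw_mul_trace1 (W : op C I) :
  opmul (Lw W) (fun k l => trace1 k l) = opscale (\sum_i W i i) (fun k l => trace1 k l).
Proof.
apply: functional_extensionality => k; apply: functional_extensionality => l.
rewrite /opmul /opscale /Lw.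
transitivity (\sum_i \sum_j W i j * \sum_m V (i,k) (j,m) * trace1 m l).
  under eq_bigr do rewrite mulr_suml.
  rewrite exchange_big; apply: eq_bigr => i _.
  under eq_bigr do rewrite mulr_suml.
  rewrite exchange_big; apply: eq_bigr => j _.
  by rewrite mulr_sumr; apply: eq_bigr => m _; ring.
under eq_bigr do under eq_bigr do rewrite trace1_fixed_sum.
rewrite mulr_suml; apply: eq_bigr => i _.
transitivity (\sum_j (j == i)%:R * (W i j * trace1 k l)); last by rewrite sum_indicl.
by apply: eq_bigr => j _; rewrite (eq_sym j); ring.
Qed.

Lemma opapp_V_vtens (x y : vec C I) a b :
  opapp V (vtens x y) (a,b) = \sum_i \sum_i' V (a,b) (i,i') * (x i * y i').
Proof. by rewrite /opapp /vtens sum_pair. Qed.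

Lemma inner_vtens_suml (a x : vec C I) (u : vec C (I * I)%type) :
  \sum_i (a i)^* * inner (vtens (basis C i) x) u = inner (vtens a x) u.
Proof.
rewrite /inner /vtens [RHS]sum_pair.
transitivity (\sum_i \sum_k \sum_l (a i)^* * ((basis C i k)^* * (x l)^* * u (k,l))).
  apply: eq_bigr => i _; rewrite sum_pair mulr_sumr; apply: eq_bigr => k _.
  by rewrite mulr_sumr; apply: eq_bigr => l _; rewrite rmorphM /=; ring.
rewrite exchange_big; apply: eq_bigr => k _.
transitivity (\sum_i (i == k)%:R * \sum_l (a i)^* * (x l)^* * u (k,l)).
  apply: eq_bigr => i _; rewrite mulr_sumr; apply: eq_bigr => l _.
  by rewrite /basis eq_sym rmorph_nat; ring.
rewrite sum_indicl; apply: eq_bigr => l _; rewrite rmorphM; ring.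
Qed.

Lemma inner_vtens_sumr (b y : vec C I) (u : vec C (I * I)%type) :
  \sum_j b j * inner u (vtens (basis C j) y) = inner u (vtens b y).
Proof.
rewrite -[RHS]conjCK -inner_conj -inner_vtens_suml rmorph_sum; apply: eq_bigr => j _.
by rewrite rmorphM /= conjCK -inner_conj.
Qed.

Lemma inner_V_vtens_sumr (b y : vec C I) (u : vec C (I * I)%type) :
  \sum_j b j * inner u (opapp V (vtens (basis C j) y)) = inner u (opapp V (vtens b y)).
Proof. by rewrite inner_adjr -inner_vtens_sumr; apply: eq_bigr => j _; rewrite inner_adjr. Qed.

Definition Vcoef (x : vec C I) i m := inner (vtens (basis C i) x) (opapp V (vtens (basis C m) x)).

Lemma Vcoef_sum (a b x : vec C I) :
  \sum_i \sum_m (a i)^* * b m * Vcoef x i m = inner (vtens a x) (opapp V (vtens b x)).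
Proof.
rewrite -inner_vtens_suml; apply: eq_bigr => i _.
rewrite -inner_V_vtens_sumr mulr_sumr; apply: eq_bigr => m _; rewrite /Vcoef; ring.
Qed.

Definition dens (f : vec C I) : op C I := fun i j => (f i)^* * f j.

Lemma delta_entry (W : op C I) a b a' b' :
  delta V (Lw W) (a,b) (a',b') = \sum_i \sum_j W i j * \sum_m V (i,a) (m,a') * V (m,b) (j,b').
Proof.
rewrite /delta /opmul /optens /opadj sum_pair.
transitivity (\sum_c' \sum_d \sum_c V (a,b) (c,d) * Lw W c c' * (V (a',b') (c',d))^*).
  apply: eq_bigr => c' _; apply: eq_bigr => d _.
  rewrite sum_pair mulr_suml.
  transitivity (\sum_c \sum_d0 (d0 == d)%:R * (V (a,b) (c,d0) * Lw W c c' * (V (a',b') (c',d))^*)).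
    apply: eq_bigr => c _; rewrite mulr_suml; apply: eq_bigr => d0 _.
    by rewrite /op1 /=; ring.
  by apply: eq_bigr => c _; rewrite sum_indicl.
transitivity (\sum_c' \sum_d \sum_c \sum_i \sum_j
   W i j * (V (a,b) (c,d) * V (i,c) (j,c') * (V (a',b') (c',d))^*)).
  apply: eq_bigr => c' _; apply: eq_bigr => d _; apply: eq_bigr => c _.
  rewrite /Lw mulr_sumr mulr_suml; apply: eq_bigr => i _.
  rewrite mulr_sumr mulr_suml; apply: eq_bigr => j _; ring.
rewrite sum_shift3_of5; apply: eq_bigr => i _; apply: eq_bigr => j _.
rewrite pentagon_sum12 // mulr_sumr; apply: eq_bigr => c' _.
rewrite mulr_sumr; apply: eq_bigr => d _.
rewrite mulr_suml mulr_sumr; apply: eq_bigr => c _; ring.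
Qed.

Lemma delta_quad (W : op C I) (xi zeta : vec C I) :
  inner (vtens xi zeta) (opapp (delta V (Lw W)) (vtens xi zeta)) =
  \sum_i \sum_j W i j * \sum_m Vcoef xi i m * Vcoef zeta m j.
Proof.
transitivity (\sum_a \sum_b \sum_a' \sum_b' \sum_i \sum_j \sum_m
   ((xi a)^* * V (i,a) (m,a') * xi a') * (W i j * ((zeta b)^* * V (m,b) (j,b') * zeta b'))).
  rewrite /inner /opapp /vtens sum_pair; apply: eq_bigr => a _.
  apply: eq_bigr => b _; rewrite sum_pair mulr_sumr; apply: eq_bigr => a' _.
  rewrite mulr_sumr; apply: eq_bigr => b' _.
  rewrite delta_entry mulr_suml mulr_sumr; apply: eq_bigr => i _.
  rewrite mulr_suml mulr_sumr; apply: eq_bigr => j _.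
  rewrite mulr_sumr mulr_suml mulr_sumr; apply: eq_bigr => m _.
  by rewrite rmorphM /=; ring.
rewrite sum_shift4_of7; apply: eq_bigr => i _; apply: eq_bigr => j _.
rewrite mulr_sumr; apply: eq_bigr => m _.
transitivity (W i j * \sum_a \sum_b \sum_a' \sum_b'
   ((xi a)^* * V (i,a) (m,a') * xi a') * ((zeta b)^* * V (m,b) (j,b') * zeta b')).
  rewrite mulr_sumr; apply: eq_bigr => a _; rewrite mulr_sumr; apply: eq_bigr => b _.
  rewrite mulr_sumr; apply: eq_bigr => a' _; rewrite mulr_sumr; apply: eq_bigr => b' _; ring.
congr (_ * _).
rewrite (sum4_mul (fun a a' => (xi a)^* * V (i,a) (m,a') * xi a')
                    (fun b b' => (zeta b)^* * V (m,b) (j,b') * zeta b')).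
by rewrite /Vcoef !inner_V_basisl.
Qed.

Lemma rhoZ (y x : vec C I) (a : C) :
  rho V (omega y (vscale a x)) = opscale a (rho V (omega y x)).
Proof.
apply: functional_extensionality => i; apply: functional_extensionality => k.
rewrite /opscale !rhoE mulr_sumr; apply: eq_bigr => k0 _.
rewrite mulr_sumr; apply: eq_bigr => l _; rewrite /vscale; ring.
Qed.
Lemma rhoB (z x y : vec C I) :
  rho V (omega z (vsub x y)) = opsub (rho V (omega z x)) (rho V (omega z y)).
Proof.
apply: functional_extensionality => i; apply: functional_extensionality => k.
rewrite /opsub !rhoE -sumrB; apply: eq_bigr => k0 _.
rewrite -sumrB; apply: eq_bigr => l _; rewrite /vsub; ring.
Qed.

Section PreSubgroup.
Variable f : vec C I.
Hypothesis hff : inner f f = 1.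
Hypothesis hVf : opapp V (vtens f f) = vtens f f.
Let q := Lw (dens f).

Lemma convw_dens : convw (dens f) (dens f) = dens f.
Proof.
apply: functional_extensionality => b; apply: functional_extensionality => b'.
rewrite /convw /dens.
transitivity (\sum_a (\sum_i \sum_i' (f i)^* * (f i')^* * (V (a,b) (i,i'))^*) *
                      (\sum_j \sum_j' f j * f j' * V (a,b') (j,j'))).
  apply: eq_bigr => a _.
  rewrite -(sum4_mul (fun i i' => (f i)^* * (f i')^* * (V (a,b) (i,i'))^*)
                       (fun j j' => f j * f j' * V (a,b') (j,j'))).
  apply: eq_bigr => i _; apply: eq_bigr => j _; apply: eq_bigr => i' _; apply: eq_bigr => j' _; ring.
have h1 : forall a b0, \sum_j \sum_j' f j * f j' * V (a,b0) (j,j') = f a * f b0.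
  move=> a b0; have := congr1 (fun v => v (a,b0)) hVf.
  rewrite opapp_V_vtens /vtens => <-.
  by apply: eq_bigr => j _; apply: eq_bigr => j' _; ring.
have h2 : forall a b0, \sum_i \sum_i' (f i)^* * (f i')^* * (V (a,b0) (i,i'))^* = (f a)^* * (f b0)^*.
  move=> a b0; rewrite -rmorphM -h1 rmorph_sum; apply: eq_bigr => i _.
  by rewrite rmorph_sum; apply: eq_bigr => i' _; rewrite !rmorphM.
under eq_bigr do rewrite h1 h2.
transitivity ((\sum_a (f a)^* * f a) * ((f b)^* * f b')).
  by rewrite mulr_suml; apply: eq_bigr => a _; ring.
have -> : \sum_a (f a)^* * f a = 1 by exact: hff.
by rewrite mul1r.
Qed.

Lemma Lw_dens_idem : opmul q q = q.
Proof. by rewrite /q Lw_mul convw_dens. Qed.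

Lemma Lw_dens_range_fixed x : opapp V (vtens f (opapp q x)) = vtens f (opapp q x).
Proof.
apply: unitary_fixed => //.
by rewrite -inner_Lw_dens -/q -opapp_mul Lw_dens_idem inner_vtens hff mul1r.
Qed.

Lemma Lw_dens_proj : orth_proj q.
Proof.
apply: orth_proj_of_idem; first exact: Lw_dens_idem.
move=> x; apply: vec_ext => y.
rewrite inner_adjr opadjK (inner_conj (opapp q x)) /q inner_Lw_dens inner_adjr.
rewrite unitary_fixed_adj // ?Lw_dens_range_fixed // inner_conj inner_vtens hff mul1r.
by rewrite conjCK.
Qed.

Let D := delta V q.

Lemma delta_Lw_dens_proj : orth_proj D.
Proof. exact: orth_proj_conj hU (orth_proj_tens Lw_dens_proj (orth_proj1 C I)). Qed.

Lemma delta_Lw_dens_inner_fixedr (xi zeta : vec C I) : opapp V (vtens f zeta) = vtens f zeta ->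
  inner (vtens xi zeta) (opapp D (vtens xi zeta)) = inner zeta zeta * inner xi (opapp q xi).
Proof.
move=> hz; rewrite /D /q delta_quad.
have hG : forall m, \sum_j f j * Vcoef zeta m j = f m * inner zeta zeta.
  move=> m; rewrite /Vcoef inner_V_vtens_sumr hz inner_vtens inner_basisl //.
transitivity (\sum_i \sum_m (f i)^* * Vcoef xi i m * \sum_j f j * Vcoef zeta m j).
  apply: eq_bigr => i _.
  transitivity (\sum_j \sum_m (f i)^* * f j * (Vcoef xi i m * Vcoef zeta m j)).
    by apply: eq_bigr => j _; rewrite /dens mulr_sumr.
  rewrite exchange_big; apply: eq_bigr => m _.
  by rewrite mulr_sumr; apply: eq_bigr => j _; ring.
under eq_bigr do under eq_bigr do rewrite hG.
rewrite /dens inner_Lw_dens -Vcoef_sum mulr_sumr; apply: eq_bigr => i _.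
by rewrite mulr_sumr; apply: eq_bigr => m _; ring.
Qed.

Lemma delta_Lw_dens_inner_fixedl (xi zeta : vec C I) : opapp V (vtens f xi) = vtens f xi ->
  inner (vtens xi zeta) (opapp D (vtens xi zeta)) = inner xi xi * inner zeta (opapp q zeta).
Proof.
move=> hx; rewrite /D /q delta_quad.
have hG : forall m, \sum_i (f i)^* * Vcoef xi i m = (f m)^* * inner xi xi.
  move=> m; rewrite /Vcoef inner_vtens_suml inner_adjr (unitary_fixed_adj hU hx) inner_vtens inner_basisr //.
transitivity (\sum_m \sum_j (\sum_i (f i)^* * Vcoef xi i m) * f j * Vcoef zeta m j).
  transitivity (\sum_i \sum_j \sum_m (f i)^* * f j * (Vcoef xi i m * Vcoef zeta m j)).
    by apply: eq_bigr => i _; apply: eq_bigr => j _; rewrite /dens mulr_sumr.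
  rewrite sum_rot3 exchange_big; apply: eq_bigr => m _; apply: eq_bigr => j _.
  by rewrite !mulr_suml; apply: eq_bigr => i _; ring.
under eq_bigr do under eq_bigr do rewrite hG.
rewrite /dens inner_Lw_dens -Vcoef_sum mulr_sumr; apply: eq_bigr => m _.
by rewrite mulr_sumr; apply: eq_bigr => j _; ring.
Qed.

Lemma vsplit_proj (x : vec C I) : x = vadd (opapp q x) (vsub x (opapp q x)).
Proof. by apply: functional_extensionality => i; rewrite /vadd /vsub addrC subrK. Qed.

Lemma Lw_dens_kill (x : vec C I) : opapp q (vsub x (opapp q x)) = @vzero C I.
Proof.
rewrite opappB -opapp_mul Lw_dens_idem //.
by apply: functional_extensionality => i; rewrite /vsub /vzero subrr.
Qed.

Lemma delta_Lw_dens_fixedr (xi zeta : vec C I) : opapp V (vtens f zeta) = vtens f zeta ->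
  opapp D (vtens xi zeta) = vtens (opapp q xi) zeta.
Proof.
move=> hz.
rewrite {1}(vsplit_proj xi) vtensDl opappD.
have h1 : opapp D (vtens (opapp q xi) zeta) = vtens (opapp q xi) zeta.
  apply: proj_fixed; first exact: delta_Lw_dens_proj.
  by rewrite delta_Lw_dens_inner_fixedr // -opapp_mul Lw_dens_idem // inner_vtens mulrC.
have h2 : opapp D (vtens (vsub xi (opapp q xi)) zeta) = @vzero C (I * I)%type.
  apply: proj_eq0; first exact: delta_Lw_dens_proj.
  by rewrite delta_Lw_dens_inner_fixedr // Lw_dens_kill inner0r mulr0.
rewrite h1 h2; apply: functional_extensionality => i; by rewrite /vadd /vzero addr0.
Qed.

Lemma delta_Lw_dens_fixedl (xi zeta : vec C I) : opapp V (vtens f xi) = vtens f xi ->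
  opapp D (vtens xi zeta) = vtens xi (opapp q zeta).
Proof.
move=> hx.
rewrite {1}(vsplit_proj zeta) vtensDr opappD.
have h1 : opapp D (vtens xi (opapp q zeta)) = vtens xi (opapp q zeta).
  apply: proj_fixed; first exact: delta_Lw_dens_proj.
  by rewrite delta_Lw_dens_inner_fixedl // -opapp_mul Lw_dens_idem // inner_vtens.
have h2 : opapp D (vtens xi (vsub zeta (opapp q zeta))) = @vzero C (I * I)%type.
  apply: proj_eq0; first exact: delta_Lw_dens_proj.
  by rewrite delta_Lw_dens_inner_fixedl // Lw_dens_kill inner0r mulr0.
rewrite h1 h2; apply: functional_extensionality => i; by rewrite /vadd /vzero addr0.
Qed.

Lemma delta_Lw_dens_mul1p : opmul D (optens op1 q) = optens q q.
Proof.
apply: op_ext_tens => xi zeta.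
rewrite opapp_mul !opapp_tens opapp1 delta_Lw_dens_fixedr //.
exact: Lw_dens_range_fixed.
Qed.

Lemma delta_Lw_dens_mulp1 : opmul D (optens q op1) = optens q q.
Proof.
apply: op_ext_tens => xi zeta.
rewrite opapp_mul !opapp_tens opapp1 delta_Lw_dens_fixedl //.
exact: Lw_dens_range_fixed.
Qed.

End PreSubgroup.

Section Projection.
Variable W : op C I.
Let p := Lw W.
Hypothesis hp : orth_proj p.
Hypothesis hp0 : p <> op0.
Let psi := opapp p e.
Let c := inner e psi.

Lemma proj_psi : opapp p psi = psi.
Proof. by rewrite /psi -opapp_mul hp.2. Qed.
Lemma c_inner_psi : c = inner psi psi.
Proof. by rewrite /c /psi proj_inner_self. Qed.
Lemma c_ge0 : 0 <= c.
Proof. by rewrite c_inner_psi inner_ge0. Qed.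
Lemma c_conj : c^* = c.
Proof. by rewrite geC0_conj // c_ge0. Qed.
Lemma inner_psi_e : inner psi e = c.
Proof. by rewrite inner_conj -/c c_conj. Qed.
Lemma optr_p : optr p = n * c.
Proof. by rewrite /p optr_Lw. Qed.
Lemma c_neq0 : c != 0.
Proof.
apply/negP => /eqP hc; apply: hp0.
have h0 : optr (opmul (opadj p) p) = 0 by rewrite hp.1 hp.2 optr_p hc mulr0.
apply: functional_extensionality => i; apply: functional_extensionality => j.
exact: optr_adj_mul_eq0 h0 i j.
Qed.
Lemma c_gt0 : 0 < c.
Proof. by rewrite lt_def c_neq0 c_ge0. Qed.

Let A := delta V p.
Lemma delta_proj : orth_proj A.
Proof. exact: orth_proj_conj hU (orth_proj_tens hp (orth_proj1 C I)). Qed.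

Lemma delta_vtens_e (x : vec C I) : opapp A (vtens e x) = opapp V (vtens (opapp p e) x).
Proof.
rewrite /A /delta !opapp_mul unitary_fixed_adj // ?hfix // opapp_tens opapp1 //.
Qed.

Lemma psi_fixed_of_le : op_le (optens p p) (delta V p) -> opapp V (vtens psi psi) = vtens psi psi.
Proof.
move=> h1; set x := vtens psi psi.
have hB : opapp (optens p p) x = x by rewrite /x opapp_tens proj_psi.
have hAx : opapp A x = x.
  apply: proj_fixed; first exact: delta_proj.
  apply/eqP; rewrite eq_le (proj_inner_le _ delta_proj) /=.
  by have := h1 x; rewrite opapp_opsub innerBr hB subr_ge0.
apply: unitary_fixed => //.
have h2 : inner (opapp V x) x = c * c.
  rewrite /x -/psi -delta_vtens_e inner_adjl delta_proj.1 hAx inner_vtens -c_inner_psi //.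
rewrite inner_conj h2 rmorphM /= c_conj /x inner_vtens -c_inner_psi //.
Qed.

Let s := vnorm psi.
Lemma norm_psiE : s = sqrtC c.
Proof. by rewrite /s /vnorm -c_inner_psi. Qed.
Lemma norm_psi_gt0 : 0 < s.
Proof. by rewrite norm_psiE sqrtC_gt0 c_gt0. Qed.
Lemma norm_psi_conj : s^* = s.
Proof. by rewrite geC0_conj // ltW // norm_psi_gt0. Qed.
Lemma norm_psi_sq : s * s = c.
Proof. by rewrite norm_psiE -expr2 sqrtCK. Qed.
Lemma norm_psi_neq0 : s != 0.
Proof. by rewrite gt_eqF // norm_psi_gt0. Qed.

Let f := vscale s^-1 psi.
Lemma psi_scale_f : psi = vscale s f.
Proof.
by apply: functional_extensionality => i; rewrite /f /vscale mulrA mulfV ?norm_psi_neq0 // mul1r.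
Qed.
Lemma inner_f_f : inner f f = 1.
Proof.
rewrite /f innerZl innerZr -c_inner_psi -norm_psi_sq fmorphV /= norm_psi_conj.
by rewrite mulrA mulrACA mulVf ?norm_psi_neq0 // mul1r.
Qed.
Lemma inner_f_e : inner f e = s.
Proof.
rewrite /f innerZl inner_psi_e -norm_psi_sq fmorphV /= norm_psi_conj mulrA mulVf ?norm_psi_neq0 //.
by rewrite mul1r.
Qed.

Lemma f_fixed_of_psi_fixed : opapp V (vtens psi psi) = vtens psi psi -> opapp V (vtens f f) = vtens f f.
Proof.
move=> h; rewrite /f vtensZ opappZ h //.
Qed.

Lemma f_psi_fixed : opapp V (vtens f f) = vtens f f -> opapp V (vtens f psi) = vtens f psi.
Proof.
move=> h.
have -> : vtens f psi = vscale s (vtens f f).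
  by rewrite psi_scale_f; apply: functional_extensionality => -[i k]; rewrite /vtens /vscale; ring.
by rewrite opappZ h.
Qed.

(* p and q are projections with Tr p = Tr q = Tr pq, so Tr (p - q)^* (p - q) = 0. *)
Lemma p_Lw_dens : opapp V (vtens f f) = vtens f f -> p = Lw (dens f).
Proof.
move=> hVf.
set q := Lw (dens f).
have hq := Lw_dens_proj inner_f_f hVf.
apply: opsub_eq0; apply: optr_adj_mul_eq0.
rewrite opadjB hp.1 hq.1 opmulBl !opmulBr hp.2 hq.2 !optrB optr_p.
have htrq : optr q = n * c.
  rewrite /q optr_Lw inner_e_Lw.
  transitivity (n * (inner f e * (inner f e)^*)).
    congr (_ * _); rewrite /inner mulr_suml; apply: eq_bigr => i _.
    rewrite rmorph_sum mulr_sumr; apply: eq_bigr => j _.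
    by rewrite /dens rmorphM /= conjCK; ring.
  by rewrite inner_f_e norm_psi_conj norm_psi_sq.
have htrpq : optr (opmul p q) = n * c.
  rewrite /q (Lw_mul W (dens f)) optr_Lw -Lw_mul opapp_mul inner_adjr.
  have hpa : opadj (Lw W) = Lw W := hp.1.
  rewrite hpa /dens inner_Lw_dens inner_adjr (unitary_fixed_adj hU (f_psi_fixed hVf)).
  by rewrite inner_vtens inner_f_f mul1r inner_psi_e.
rewrite htrq htrpq optrC htrpq; ring.
Qed.

Lemma presubgroup_of_psi_fixed : opapp V (vtens psi psi) = vtens psi psi ->
  pre_subgroup V e f /\ p = Lsl V (omega f f).
Proof.
move=> h.
have hVf := f_fixed_of_psi_fixed h.
split; last by rewrite Lsl_omegaE p_Lw_dens.
split; first by rewrite /vnorm inner_f_f sqrtC1.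
by rewrite inner_f_e norm_psi_gt0.
Qed.

Let R := rho V (omega e psi).

Lemma delta_mul1p_of_presubgroup : pre_subgroup V e f /\ p = Lsl V (omega f f) ->
  opmul (delta V p) (optens op1 p) = optens p p.
Proof.
case=> [[_ [_ hVf]] _].
by rewrite (p_Lw_dens hVf); apply: delta_Lw_dens_mul1p; [exact: inner_f_f | exact: hVf].
Qed.

Lemma delta_mulp1_of_presubgroup : pre_subgroup V e f /\ p = Lsl V (omega f f) ->
  opmul (delta V p) (optens p op1) = optens p p.
Proof.
case=> [[_ [_ hVf]] _].
by rewrite (p_Lw_dens hVf); apply: delta_Lw_dens_mulp1; [exact: inner_f_f | exact: hVf].
Qed.

Lemma le_of_delta_mul1p : opmul (delta V p) (optens op1 p) = optens p p -> op_le (optens p p) (delta V p).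
Proof.
move=> h; apply: proj_sub_positive; [exact: delta_proj | exact: orth_proj_tens |].
by rewrite -{1}h opmulA delta_proj.2 h.
Qed.

Lemma le_of_delta_mulp1 : opmul (delta V p) (optens p op1) = optens p p -> op_le (optens p p) (delta V p).
Proof.
move=> h; apply: proj_sub_positive; [exact: delta_proj | exact: orth_proj_tens |].
by rewrite -{1}h opmulA delta_proj.2 h.
Qed.

Lemma psi_fixed_of_f_fixed : opapp V (vtens f f) = vtens f f -> opapp V (vtens psi psi) = vtens psi psi.
Proof.
move=> h; rewrite psi_scale_f vtensZ opappZ h //.
Qed.

Lemma R_sq_of_psi_fixed : opapp V (vtens psi psi) = vtens psi psi -> opmul R R = opscale c R.
Proof.
move=> h; rewrite /R rho_omega_mul -rhoZ; congr (rho V (omega e _)).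
apply: functional_extensionality => b.
rewrite /rho_prod_vec /vscale (unitary_fixed_adj hU h) /vtens /c /inner.
by rewrite mulr_suml; apply: eq_bigr => c0 _; ring.
Qed.

Lemma inner_R (x y : vec C I) : inner x (opapp R y) = inner (vtens x psi) (opapp V (vtens y psi)).
Proof. by rewrite (rho_omega_e_proj hp : R = _) inner_rho_omega. Qed.

Let P := opscale c^-1 R.

Lemma R_scale_P : R = opscale c P.
Proof. by rewrite /P opscaleA mulfV ?c_neq0 // opscale1. Qed.

Lemma R_proj_of_presubgroup : pre_subgroup V e f /\ p = Lsl V (omega f f) ->
  c != 0 /\ orth_proj P.
Proof.
case=> [[_ [_ hVf]] _].
have hV := psi_fixed_of_f_fixed hVf.
split; first exact: c_neq0.
have hidem : opmul P P = P.
  by rewrite /P opscaleM R_sq_of_psi_fixed // opscaleA; congr opscale;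
     rewrite -mulrA mulVf ?c_neq0 // mulr1.
apply: orth_proj_of_idem => // z.
set x := opapp P z.
have hPx : opapp P x = x by rewrite /x -opapp_mul hidem.
have hRx : opapp R x = vscale c x by rewrite R_scale_P opappZl hPx.
have hVx : opapp V (vtens x psi) = vtens x psi.
  apply: unitary_fixed => //.
  by rewrite -inner_R hRx innerZr inner_vtens -c_inner_psi mulrC.
apply: vec_ext => y.
rewrite inner_adjr opadjK /P opappZl innerZl.
rewrite (inner_conj x) inner_R -inner_conj inner_adjl (unitary_fixed_adj hU hVx) inner_vtens -c_inner_psi.
by rewrite fmorphV /= c_conj mulrCA mulVf ?c_neq0 // mulr1.
Qed.

Lemma R_positive_of_proj : c != 0 /\ orth_proj P -> positive_op R.
Proof.
case=> _ hP x.
by rewrite R_scale_P opappZl innerZr proj_inner_self // mulr_ge0 ?c_ge0 ?inner_ge0.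
Qed.

(* By Plancherel, R^2 = c R forces rho_prod_vec psi psi = c psi. *)
Lemma psi_fixed_of_R_proj : c != 0 /\ orth_proj P -> opapp V (vtens psi psi) = vtens psi psi.
Proof.
case=> _ hP.
have hRR : opmul R R = opscale c R.
  by rewrite R_scale_P opscaleM hP.2 opscaleA.
set g := vsub (rho_prod_vec psi psi) (vscale c psi).
have hg : g = @vzero C I.
  apply: inner_self_eq0; rewrite -rho_plancherel.
  rewrite /g rhoB rhoZ -/R -rho_omega_mul -/R hRR.
  by apply: big1 => i _; apply: big1 => j _; rewrite /opsub subrr rmorph0 mul0r.
have hh : inner psi (rho_prod_vec psi psi) = c * c.
  have := congr1 (fun v => inner psi v) hg.
  rewrite /g innerBr innerZr inner0r -c_inner_psi => /eqP; rewrite subr_eq0 => /eqP //.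
have h2 : inner (vtens psi psi) (opapp V (vtens psi e)) = c * c.
  have h3 : inner (vtens psi e) (opapp (opadj V) (vtens psi psi)) = inner psi (rho_prod_vec psi psi).
    rewrite /inner /rho_prod_vec sum_pair; apply: eq_bigr => b _.
    rewrite mulr_sumr; apply: eq_bigr => c0 _; rewrite /vtens rmorphM /=; ring.
  by rewrite (inner_conj (opapp V (vtens psi e))) inner_adjl h3 hh rmorphM /= c_conj.
apply: unitary_fixed => //.
rewrite -inner_rho_omega -(rho_omega_e_proj hp) -(rho_omega_proj_e hp) inner_rho_omega h2.
by rewrite inner_vtens -c_inner_psi.
Qed.

Let lam := \sum_i W i i.
Let trace1_op : op C I := fun k l => trace1 k l.

Lemma optr_R : optr R = lam.
Proof.
apply: (mulfI nI_neq0).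
have h1 : optr R = inner e (opapp trace1_op psi).
  rewrite /optr /R /inner /opapp /trace1_op /trace1.
  under eq_bigr do rewrite rhoE.
  transitivity (\sum_k \sum_l \sum_i (e k)^* * V (i,k) (i,l) * psi l).
    by rewrite sum_rot3.
  apply: eq_bigr => k _; rewrite mulr_sumr; apply: eq_bigr => l _.
  by rewrite mulr_suml mulr_sumr; apply: eq_bigr => i _; ring.
rewrite h1 /trace1_op trace1_Lw /psi -opapp_mul /p Lw_mul -optr_Lw -Lw_mul optrC -trace1_Lw Lw_mul_trace1 optrZ.
have -> : optr (fun k l => trace1 k l) = n by exact: optr_trace1.
by rewrite mulrC.
Qed.

Lemma lam_idem : lam * lam = lam.
Proof.
have h := Lw_mul_trace1 W.
have h2 : opmul p (opmul p trace1_op) = opscale (lam * lam) trace1_op.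
  by rewrite /trace1_op h opmulZr h opscaleA.
rewrite opmulA hp.2 h in h2.
have := congr1 (@optr C I) h2; rewrite !optrZ (optr_trace1 : optr trace1_op = n) => /(mulIf nI_neq0) //.
Qed.

Lemma lam_le1 : lam <= 1.
Proof.
have h : lam * (lam - 1) = 0 by rewrite mulrBr mulr1 lam_idem subrr.
move/eqP: h; rewrite mulf_eq0 => /orP[/eqP -> | ]; first exact: ler01.
by rewrite subr_eq0 => /eqP ->.
Qed.

Section PositiveR.
Hypothesis hR : positive_op R.

Lemma inner_R_le y : inner y (opapp R y) <= c * inner y y.
Proof.
rewrite inner_R (le_trans (unitary_inner_le hU _)) ?inner_vtens -?c_inner_psi ?(mulrC c) //.
by rewrite -inner_R positive_inner_real.
Qed.

Lemma inner_RR_le x : inner (opapp R x) (opapp R x) <= c * inner x (opapp R x).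
Proof.
set N := inner (opapp R x) (opapp R x); set a := inner x (opapp R x).
have hN : 0 <= N by apply: inner_ge0.
have ha : 0 <= a by apply: hR.
have hcs := positive_cauchy_schwarz x (opapp R x) hR.
rewrite -/N -/a (geC0_conj hN) in hcs.
have hb := inner_R_le (opapp R x); rewrite -/N in hb.
have hNa : N * N <= c * N * a.
  by rewrite (le_trans hcs) // ler_wpM2r // -opapp_mul.
have [->|Nneq0] := eqVneq N 0; first by rewrite mulr_ge0 // c_ge0.
have Ngt0 : 0 < N by rewrite lt_def Nneq0 hN.
by rewrite -(ler_pM2l Ngt0) mulrCA mulrA.
Qed.

(* c R - R^2 is positive with trace c (lam - 1) <= 0, hence vanishes. *)
Lemma R_sq_of_positive : opmul R R = opscale c R.
Proof.
have hsa := positive_selfadj hR.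
have hRC i j : R j i = (R i j)^* by rewrite -{1}hsa /opadj.
have optr_RR : optr (opmul R R) = c.
  rewrite c_inner_psi -rho_plancherel /optr /opmul; apply: eq_bigr => i _.
  by apply: eq_bigr => j _; rewrite (hRC i j) mulrC.
set M := opsub (opscale c R) (opmul R R).
have hM : positive_op M.
  move=> x; rewrite /M opapp_opsub innerBr opappZl innerZr opapp_mul.
  by rewrite (inner_adjr R x (opapp R x)) hsa subr_ge0 inner_RR_le.
have htr : optr M <= 0.
  rewrite /M optrB optrZ optr_RR optr_R subr_le0.
  by rewrite -{2}[c]mulr1 ler_wpM2l ?c_ge0 ?lam_le1.
by symmetry; apply: opsub_eq0; exact: positive_optr_le0 hM htr.
Qed.

Lemma R_proj_of_positive : c != 0 /\ orth_proj P.
Proof.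
split; first exact: c_neq0.
split; first by rewrite /P opadjZ positive_selfadj // fmorphV /= c_conj.
by rewrite /P opscaleM R_sq_of_positive opscaleA -mulrA mulVf ?c_neq0 // mulr1.
Qed.

End PositiveR.

Lemma tfae_Lw_proj :
  [<-> op_le (optens p p) (delta V p);
       opmul (delta V p) (optens op1 p) = optens p p;
       opmul (delta V p) (optens p op1) = optens p p;
       positive_op (rho V (omega e (opapp p e)));
       inner e (opapp p e) != 0 /\
         orth_proj (opscale (inner e (opapp p e))^-1 (rho V (omega e (opapp p e))));
       pre_subgroup V e f /\ p = Lsl V (omega f f)].
Proof.
tfae.
- by move/psi_fixed_of_le/presubgroup_of_psi_fixed/delta_mul1p_of_presubgroup.
- by move/le_of_delta_mul1p/psi_fixed_of_le/presubgroup_of_psi_fixed/delta_mulp1_of_presubgroup.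
- by move/le_of_delta_mulp1/psi_fixed_of_le/presubgroup_of_psi_fixed/R_proj_of_presubgroup/R_positive_of_proj.
- exact: R_proj_of_positive.
- by move/psi_fixed_of_R_proj/presubgroup_of_psi_fixed.
- by move/delta_mul1p_of_presubgroup/le_of_delta_mul1p.
Qed.

End Projection.

End MultUnitary.

Theorem proposition3p11 (C : numClosedFieldType) (I : finType)
  (V : op C (I * I)%type) (e : vec C I) (p : op C I) :
  multiplicative_unitary V ->
  (forall xi : vec C I, fixed_vector V xi -> exists c : C, xi = vscale c e) ->
  fixed_vector V e -> inner e e = 1 ->
  inS V p -> orth_proj p -> p <> op0 ->
  let f := vscale (vnorm (opapp p e))^-1 (opapp p e) in
  [<-> op_le (optens p p) (delta V p);
       opmul (delta V p) (optens op1 p) = optens p p;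
       opmul (delta V p) (optens p op1) = optens p p;
       positive_op (rho V (omega e (opapp p e)));
       inner e (opapp p e) != 0 /\
         orth_proj (opscale (inner e (opapp p e))^-1 (rho V (omega e (opapp p e))));
       pre_subgroup V e f /\ p = Lsl V (omega f f)].
Proof.
move=> hMU hmult hfix he1 [w [hw hpw]] hp hp0.
subst p.
rewrite (Lsl_Lw V hw) in hp hp0 *.
exact: (tfae_Lw_proj hMU hmult hfix he1 hp hp0).
Qed.
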